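(* Every convex polyiamond can be domed.
   Context: All equilateral triangles have unit edge length. A polyiamond is a polygon that is a union of unit equilateral triangles glued edge to edge. A convex polygon $P$ can be domed if there is a convex polyhedron that has $P$ as one face and all of whose other faces are convex polyiamonds. *)

From Stdlib Require Import Reals List ZArith.
Open Scope R_scope.

Record V3 := mkV { vx : R; vy : R; vz : R }.

Definition vadd (a b : V3) : V3 := mkV (vx a + vx b) (vy a + vy b) (vz a + vz b).
Definition vsub (a b : V3) : V3 := mkV (vx a - vx b) (vy a - vy b) (vz a - vz b).
Definition vscale (t : R) (a : V3) : V3 := mkV (t * vx a) (t * vy a) (t * vz a).
Definition vzero : V3 := mkV 0 0 0.
Definition dot (a b : V3) : R := vx a * vx b + vy a * vy b + vz a * vz b.
Definition cross (a b : V3) : V3 :=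
  mkV (vy a * vz b - vz a * vy b) (vz a * vx b - vx a * vz b) (vx a * vy b - vy a * vx b).
Definition det3 (a b c : V3) : R := dot a (cross b c).

Definition region := V3 -> Prop.
Definition same_region (A B : region) : Prop := forall x, A x <-> B x.

(* Linear combination sum_i w_i p_i (lists truncated to common length). *)
Fixpoint lincomb (w : list R) (l : list V3) : V3 :=
  match w, l with
  | a :: w', p :: l' => vadd (vscale a p) (lincomb w' l')
  | _, _ => vzero
  end.

Definition hull (l : list V3) : region := fun x =>
  exists w : list R, length w = length l /\ Forall (fun a => 0 <= a) w /\
    fold_right Rplus 0 w = 1 /\ x = lincomb w l.

Definition convex (A : region) : Prop :=
  forall x y t, A x -> A y -> 0 <= t <= 1 -> A (vadd x (vscale t (vsub y x))).

(* Unit triangles of a triangular lattice with origin o and unit generators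
   u, v at angle 60 degrees (so lattice triangles are unit equilateral). *)
Inductive ltri := Up (i j : Z) | Down (i j : Z).

Definition lpt (o u v : V3) (i j : Z) : V3 :=
  vadd o (vadd (vscale (IZR i) u) (vscale (IZR j) v)).

Definition ltri_pts (o u v : V3) (t : ltri) : list V3 :=
  match t with
  | Up i j => lpt o u v i j :: lpt o u v (i + 1) j :: lpt o u v i (j + 1) :: nil
  | Down i j => lpt o u v (i + 1) j :: lpt o u v i (j + 1) :: lpt o u v (i + 1) (j + 1) :: nil
  end.

(* A convex polyiamond (placed anywhere in 3-space): a convex set which is a
   nonempty finite union of unit equilateral triangles glued edge to edge,
   i.e. of triangles of one triangular lattice of unit edge length. *)
Definition convex_polyiamond (P : region) : Prop :=
  convex P /\
  exists (o u v : V3) (T : list ltri),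
    dot u u = 1 /\ dot v v = 1 /\ dot u v = 1 / 2 /\ T <> nil /\
    same_region P (fun x => exists t, In t T /\ hull (ltri_pts o u v t) x).

(* A convex polyhedron: convex hull of a finite point set with nonempty
   interior (it contains four affinely independent points). *)
Definition full_dim (S : list V3) : Prop :=
  exists a b c d, In a S /\ In b S /\ In c S /\ In d S /\
    det3 (vsub b a) (vsub c a) (vsub d a) <> 0.

(* F is a face (2-dimensional face, i.e. facet) of the convex body K:
   the intersection of K with a supporting plane, of dimension 2. *)
Definition is_face (K F : region) : Prop :=
  exists (n : V3) (c : R), n <> vzero /\
    (forall x, K x -> dot n x <= c) /\
    same_region F (fun x => K x /\ dot n x = c) /\
    exists a b d, F a /\ F b /\ F d /\ cross (vsub b a) (vsub d a) <> vzero.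

Definition can_be_domed (P : region) : Prop :=
  exists S : list V3, full_dim S /\ is_face (hull S) P /\
    forall F, is_face (hull S) F -> ~ same_region F P -> convex_polyiamond F.

(* In the coordinates x = o + i u + j v of its triangular lattice, a convex polyiamond is a
   lattice hexagon a <= i <= d, b <= j <= e, c <= i + j <= f: convexity forces each corner
   of this hexagon to be a vertex of the tiling.  Let w be the apex of the regular tetrahedron
   on the unit triangle (o, o + u, o + v), and take for the dome the convex hull of the points
   o + i u + j v + k w with integral i, j, k such that k >= 0, a <= i <= d, b <= j <= e and
   c <= i + j + k <= f.  In the coordinates i, i + j, i + j + k these inequalities only bound
   differences of coordinates, so the region they define has integral vertices and is the
   dome itself.  Its bottom facet is the given hexagon; every other facet lies in a plane
   spanned by two edges of the tetrahedron and is again a lattice hexagon made of unit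
   triangles.  Finally, a face containing three non-collinear points is one of these seven
   facets, because the centroid of the three points lies on exactly one bounding plane. *)

From Stdlib Require Import Reals List ZArith Bool Lra Lia.
Open Scope R_scope.

Lemma V3_ext (a b : V3) : vx a = vx b -> vy a = vy b -> vz a = vz b -> a = b.
Proof. destruct a, b; simpl; intros; subst; reflexivity. Qed.

Ltac vunfold := unfold det3, vadd, vsub, vscale, vzero, dot, cross in *.
Ltac vring := apply V3_ext; vunfold; simpl; ring.

Lemma dot_self_eq0 (x : V3) : dot x x = 0 -> x = vzero.
Proof.
  destruct x as [x1 x2 x3]; vunfold; simpl; intros H.
  assert (x1 = 0 /\ x2 = 0 /\ x3 = 0) as (-> & -> & ->) by (repeat split; nra).
  reflexivity.
Qed.

Lemma vscale_eq0 (s : R) (x : V3) : s <> 0 -> vscale s x = vzero -> x = vzero.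
Proof.
  intros Hs E.
  replace x with (vscale (/ s) (vscale s x)) by (apply V3_ext; vunfold; simpl; field; exact Hs).
  rewrite E; vring.
Qed.

(** * Convex hulls of finite point lists *)

Lemma sum_nonneg (w : list R) : Forall (fun a => 0 <= a) w -> 0 <= fold_right Rplus 0 w.
Proof. induction 1; simpl; lra. Qed.

Lemma sum_scale (r : R) (w : list R) :
  fold_right Rplus 0 (map (fun a => a * r) w) = fold_right Rplus 0 w * r.
Proof. induction w as [|a w IH]; simpl; [|rewrite IH]; ring. Qed.

Lemma sum_repeat0 (n : nat) : fold_right Rplus 0 (repeat 0 n) = 0.
Proof. induction n as [|n IH]; simpl; [|rewrite IH]; ring. Qed.

Lemma sum_interpolate (t : R) (w1 w2 : list R) : length w1 = length w2 ->
  fold_right Rplus 0 (map (fun '(a, b) => a + t * (b - a)) (combine w1 w2)) =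
  fold_right Rplus 0 w1 + t * (fold_right Rplus 0 w2 - fold_right Rplus 0 w1).
Proof.
  revert w2; induction w1 as [|a w1 IH]; intros [|b w2] Hl; simpl in *; try discriminate; [ring|].
  rewrite IH by lia; ring.
Qed.

Lemma lincomb_zero_weights (w : list R) (l : list V3) :
  Forall (fun a => 0 <= a) w -> fold_right Rplus 0 w = 0 -> lincomb w l = vzero.
Proof.
  revert l; induction w as [|a w IH]; intros [|p l] Hw Hs; simpl in *; try reflexivity.
  inversion Hw as [|? ? Ha Hw']; subst.
  pose proof (sum_nonneg w Hw').
  replace a with 0 by lra; rewrite IH by (auto; lra); vring.
Qed.

Lemma lincomb_scale_weights (r : R) (w : list R) (l : list V3) :
  lincomb (map (fun a => a * r) w) l = vscale r (lincomb w l).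
Proof.
  revert l; induction w as [|a w IH]; intros [|p l]; simpl; try vring.
  rewrite IH; vring.
Qed.

Lemma lincomb_interpolate (t : R) (w1 w2 : list R) (l : list V3) :
  length w1 = length l -> length w2 = length l ->
  lincomb (map (fun '(a, b) => a + t * (b - a)) (combine w1 w2)) l =
  vadd (lincomb w1 l) (vscale t (vsub (lincomb w2 l) (lincomb w1 l))).
Proof.
  revert w1 w2; induction l as [|p l IH]; intros [|a w1] [|b w2] H1 H2;
    simpl in *; try discriminate; [vring|].
  rewrite IH by lia; vring.
Qed.

Lemma hull_In (l : list V3) (p : V3) : In p l -> hull l p.
Proof.
  induction l as [|q l IH]; intros Hp; [destruct Hp|].
  destruct Hp as [<-|Hp].
  - assert (Hz : Forall (fun a => 0 <= a) (repeat 0 (length l)))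
      by (apply Forall_forall; intros x Hx; apply repeat_spec in Hx; lra).
    exists (1 :: repeat 0 (length l)); simpl; rewrite repeat_length, sum_repeat0.
    rewrite (lincomb_zero_weights _ l Hz (sum_repeat0 _)).
    repeat split; [constructor; [lra|exact Hz]|ring|vring].
  - destruct (IH Hp) as (w & Hl & Hw & Hs & Hx).
    exists (0 :: w); simpl; repeat split.
    + now rewrite Hl.
    + constructor; [lra|exact Hw].
    + rewrite Hs; ring.
    + rewrite <- Hx; vring.
Qed.

Lemma hull_convex (l : list V3) : convex (hull l).
Proof.
  intros x y t (w1 & Hl1 & Hw1 & Hs1 & ->) (w2 & Hl2 & Hw2 & Hs2 & ->) Ht.
  exists (map (fun '(a, b) => a + t * (b - a)) (combine w1 w2)).
  repeat split.
  - rewrite length_map, length_combine; lia.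
  - apply Forall_forall; intros z Hz.
    apply in_map_iff in Hz; destruct Hz as [[a b] [<- Hab]].
    rewrite Forall_forall in Hw1, Hw2.
    pose proof (Hw1 _ (in_combine_l _ _ _ _ Hab)).
    pose proof (Hw2 _ (in_combine_r _ _ _ _ Hab)). nra.
  - rewrite sum_interpolate by lia; rewrite Hs1, Hs2; ring.
  - symmetry; apply lincomb_interpolate; assumption.
Qed.

Lemma hull_min (C : region) (l : list V3) :
  convex C -> (forall p, In p l -> C p) -> forall x, hull l x -> C x.
Proof.
  intros HC; induction l as [|p l IH]; intros Hl x (w & Hlen & Hw & Hs & ->).
  { destruct w; simpl in *; [lra|discriminate]. }
  destruct w as [|a w]; simpl in Hlen, Hs |- *; [discriminate|].
  inversion Hw as [|? ? Ha Hw']; subst.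
  pose proof (sum_nonneg w Hw') as Hrest.
  destruct (Req_dec a 1) as [->|Ha1].
  - rewrite (lincomb_zero_weights w l Hw') by lra.
    replace (vadd (vscale 1 p) vzero) with p by vring. apply Hl; left; reflexivity.
  - assert (Ha' : a < 1) by (apply Rnot_le_lt; intro; apply Ha1; lra).
    set (y := lincomb (map (fun b => b * / (1 - a)) w) l).
    assert (Hy : hull l y).
    { exists (map (fun b => b * / (1 - a)) w); repeat split.
      - rewrite length_map; lia.
      - apply Forall_forall; intros b Hb; apply in_map_iff in Hb.
        destruct Hb as (b' & <- & Hb'); rewrite Forall_forall in Hw'.
        apply Rmult_le_pos; [apply Hw'; exact Hb'|].
        left; apply Rinv_0_lt_compat; lra.
      - rewrite sum_scale; replace (fold_right Rplus 0 w) with (1 - a) by lra; field; lra. }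
    replace (vadd (vscale a p) (lincomb w l)) with (vadd y (vscale a (vsub p y))).
    + apply HC; [|apply Hl; left; reflexivity|lra].
      apply IH; [intros q Hq; apply Hl; right; exact Hq|exact Hy].
    + unfold y; rewrite lincomb_scale_weights.
      apply V3_ext; vunfold; simpl; field; lra.
Qed.

Lemma hull3 (p1 p2 p3 x : V3) : hull (p1 :: p2 :: p3 :: nil) x <->
  exists a b c, 0 <= a /\ 0 <= b /\ 0 <= c /\ a + b + c = 1 /\
    x = vadd (vscale a p1) (vadd (vscale b p2) (vscale c p3)).
Proof.
  split.
  - intros (w & Hl & Hw & Hs & ->).
    destruct w as [|a [|b [|c [|? ?]]]]; simpl in Hl; try discriminate.
    inversion Hw as [|? ? Ha Hw2]; inversion Hw2 as [|? ? Hb Hw3]; inversion Hw3 as [|? ? Hc _].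
    exists a, b, c; simpl in Hs; repeat split; auto; [lra|vring].
  - intros (a & b & c & Ha & Hb & Hc & Hs & ->).
    exists (a :: b :: c :: nil); repeat split.
    + repeat apply Forall_cons; auto.
    + simpl; lra.
    + simpl; vring.
Qed.

Lemma same_region_trans (A B C : region) :
  same_region A B -> same_region B C -> same_region A C.
Proof. intros H1 H2 x; rewrite (H1 x); apply H2. Qed.

Lemma same_region_sym (A B : region) : same_region A B -> same_region B A.
Proof. intros H x; symmetry; apply H. Qed.

Lemma convex_polyiamond_same (A B : region) :
  same_region A B -> convex_polyiamond B -> convex_polyiamond A.
Proof.
  intros H (Hc & o & u & v & T & Hu & Hv & Huv & HT & HB); split.
  - intros x y t Hx Hy Ht; apply H; apply Hc; [apply H, Hx|apply H, Hy|exact Ht].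
  - exists o, u, v, T; do 4 (split; [assumption|]).
    exact (same_region_trans _ _ _ H HB).
Qed.

Lemma is_face_same (K F G : region) : same_region F G -> is_face K G -> is_face K F.
Proof.
  intros HFG (n & k & Hn & Hle & HG & x1 & x2 & x3 & G1 & G2 & G3 & Hc).
  exists n, k; split; [exact Hn|split; [exact Hle|split]].
  - exact (same_region_trans _ _ _ HFG HG).
  - exists x1, x2, x3; rewrite (HFG x1), (HFG x2), (HFG x3); auto.
Qed.

(** * Triangular lattices and hexagons *)

Definition lattice_frame (u v : V3) : Prop := dot u u = 1 /\ dot v v = 1 /\ dot u v = 1 / 2.

Definition pt2 (o u v : V3) (X Y : R) : V3 := vadd o (vadd (vscale X u) (vscale Y v)).

Lemma lpt_pt2 (o u v : V3) (i j : Z) : lpt o u v i j = pt2 o u v (IZR i) (IZR j).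
Proof. reflexivity. Qed.

Lemma dot_pt2 (n o u v : V3) (X Y : R) : dot n (pt2 o u v X Y) = dot n o + X * dot n u + Y * dot n v.
Proof. unfold pt2; vunfold; simpl; ring. Qed.

Lemma pt2_inj (o u v : V3) (X Y X' Y' : R) :
  lattice_frame u v -> pt2 o u v X Y = pt2 o u v X' Y' -> X = X' /\ Y = Y'.
Proof.
  intros (Hu & Hv & Huv) E.
  pose proof (f_equal (dot u) E) as Eu; pose proof (f_equal (dot v) E) as Ev.
  rewrite !dot_pt2 in Eu, Ev.
  assert (dot v u = 1 / 2) by (rewrite <- Huv; vunfold; ring).
  rewrite Hu, Huv in Eu; rewrite Hv, H in Ev; lra.
Qed.

Lemma cross_pt2 (o u v : V3) (X1 Y1 X2 Y2 X3 Y3 : R) :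
  cross (vsub (pt2 o u v X2 Y2) (pt2 o u v X1 Y1)) (vsub (pt2 o u v X3 Y3) (pt2 o u v X1 Y1)) =
  vscale ((X2 - X1) * (Y3 - Y1) - (X3 - X1) * (Y2 - Y1)) (cross u v).
Proof. unfold pt2; vring. Qed.

Lemma lattice_frame_cross (u v : V3) : lattice_frame u v -> dot (cross u v) (cross u v) = 3 / 4.
Proof.
  intros (Hu & Hv & Huv).
  replace (dot (cross u v) (cross u v)) with (dot u u * dot v v - dot u v * dot u v)
    by (vunfold; simpl; ring).
  rewrite Hu, Hv, Huv; field.
Qed.

Lemma lattice_frame_cross_scale_neq0 (u v : V3) (s : R) :
  lattice_frame u v -> s <> 0 -> vscale s (cross u v) <> vzero.
Proof.
  intros Hf Hs E.
  pose proof (lattice_frame_cross u v Hf) as Hc.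
  assert (Hd : dot (vscale s (cross u v)) (vscale s (cross u v)) = s * s * (3 / 4))
    by (rewrite <- Hc; vunfold; simpl; ring).
  rewrite E in Hd; vunfold; simpl in Hd.
  apply Hs; nra.
Qed.

Definition cell_vertices (t : ltri) : list (Z * Z) :=
  match t with
  | Up i j => (i, j) :: (i + 1, j)%Z :: (i, j + 1)%Z :: nil
  | Down i j => (i + 1, j)%Z :: (i, j + 1)%Z :: (i + 1, j + 1)%Z :: nil
  end.

Lemma ltri_pts_vertices (o u v : V3) (t : ltri) :
  ltri_pts o u v t = map (fun p => lpt o u v (fst p) (snd p)) (cell_vertices t).
Proof. destruct t; reflexivity. Qed.

Definition in_cell (t : ltri) (X Y : R) : Prop :=
  match t with
  | Up i j => IZR i <= X /\ IZR j <= Y /\ X + Y <= IZR i + IZR j + 1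
  | Down i j => X <= IZR i + 1 /\ Y <= IZR j + 1 /\ IZR i + IZR j + 1 <= X + Y
  end.

Definition open_cell (t : ltri) (X Y : R) : Prop :=
  match t with
  | Up i j => IZR i < X /\ IZR j < Y /\ X + Y < IZR i + IZR j + 1
  | Down i j => X < IZR i + 1 /\ Y < IZR j + 1 /\ IZR i + IZR j + 1 < X + Y
  end.

Lemma hull_cell (o u v : V3) (t : ltri) (x : V3) :
  hull (ltri_pts o u v t) x <-> exists X Y, x = pt2 o u v X Y /\ in_cell t X Y.
Proof.
  destruct t as [i j|i j]; simpl; rewrite hull3; unfold lpt; rewrite !plus_IZR; split.
  - intros (a & b & c & Ha & Hb & Hc & Hs & ->).
    exists (IZR i + b), (IZR j + c); split; [|simpl; lra].
    replace a with (1 - b - c) by lra; unfold pt2; vring.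
  - intros (X & Y & -> & H1 & H2 & H3).
    exists (1 - (X - IZR i) - (Y - IZR j)), (X - IZR i), (Y - IZR j).
    repeat split; try lra; unfold pt2; vring.
  - intros (a & b & c & Ha & Hb & Hc & Hs & ->).
    exists (IZR i + 1 - b), (IZR j + 1 - a); split; [|simpl; lra].
    replace c with (1 - a - b) by lra; unfold pt2; vring.
  - intros (X & Y & -> & H1 & H2 & H3).
    exists (IZR j + 1 - Y), (IZR i + 1 - X), (X + Y - IZR i - IZR j - 1).
    repeat split; try lra; unfold pt2; vring.
Qed.

Lemma open_cell_unique (s t : ltri) (X Y : R) : open_cell s X Y -> in_cell t X Y -> s = t.
Proof.
  destruct s as [i j|i j], t as [i' j'|i' j']; simpl; intros (A1 & A2 & A3) (B1 & B2 & B3).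
  - assert (i' < i + 1 /\ j' < j + 1 /\ i + j < i' + j' + 1)%Z as (? & ? & ?).
    { repeat split; apply lt_IZR; rewrite ?plus_IZR; simpl; lra. }
    f_equal; lia.
  - assert (i < i' + 1 /\ j < j' + 1 /\ i' + j' < i + j)%Z as (? & ? & ?).
    { repeat split; apply lt_IZR; rewrite ?plus_IZR; simpl; lra. }
    lia.
  - assert (i' < i + 1 /\ j' < j + 1 /\ i + j < i' + j')%Z as (? & ? & ?).
    { repeat split; apply lt_IZR; rewrite ?plus_IZR; simpl; lra. }
    lia.
  - assert (i < i' + 1 /\ j < j' + 1 /\ i' + j' < i + j + 1)%Z as (? & ? & ?).
    { repeat split; apply lt_IZR; rewrite ?plus_IZR; simpl; lra. }
    f_equal; lia.
Qed.

Definition hexagon (o u v : V3) (a d b e c f : Z) : region := fun x =>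
  exists X Y, x = pt2 o u v X Y /\
    IZR a <= X <= IZR d /\ IZR b <= Y <= IZR e /\ IZR c <= X + Y <= IZR f.

Definition hex_point (a d b e c f : Z) (p : Z * Z) : Prop :=
  (a <= fst p <= d /\ b <= snd p <= e /\ c <= fst p + snd p <= f)%Z.

Definition cell_in_hex (a d b e c f : Z) (t : ltri) : Prop :=
  forall p, In p (cell_vertices t) -> hex_point a d b e c f p.

Lemma hex_point_IZR (a d b e c f i j : Z) : hex_point a d b e c f (i, j) ->
  IZR a <= IZR i <= IZR d /\ IZR b <= IZR j <= IZR e /\ IZR c <= IZR i + IZR j <= IZR f.
Proof. unfold hex_point; simpl; rewrite <- plus_IZR; intros H; repeat split; apply IZR_le; lia. Qed.

Lemma cell_in_hex_bounds (a d b e c f : Z) (t : ltri) (X Y : R) :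
  cell_in_hex a d b e c f t -> in_cell t X Y ->
  IZR a <= X <= IZR d /\ IZR b <= Y <= IZR e /\ IZR c <= X + Y <= IZR f.
Proof.
  intros Ht; destruct t as [i j|i j]; simpl;
    pose proof (hex_point_IZR _ _ _ _ _ _ _ _ (Ht _ (or_introl eq_refl)));
    pose proof (hex_point_IZR _ _ _ _ _ _ _ _ (Ht _ (or_intror (or_introl eq_refl))));
    pose proof (hex_point_IZR _ _ _ _ _ _ _ _ (Ht _ (or_intror (or_intror (or_introl eq_refl)))));
    rewrite ?plus_IZR in *; lra.
Qed.

Lemma hexagon_convex (o u v : V3) (a d b e c f : Z) : convex (hexagon o u v a d b e c f).
Proof.
  intros x y t (X & Y & -> & H1 & H2 & H3) (X' & Y' & -> & H1' & H2' & H3') Ht.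
  exists (X + t * (X' - X)), (Y + t * (Y' - Y)); split; [unfold pt2; vring|].
  repeat split; nra.
Qed.

Lemma Int_part_between (n m : Z) (r : R) :
  IZR n < r < IZR m -> (n <= Int_part r /\ Int_part r < m)%Z.
Proof.
  intros Hr; destruct (base_Int_part r) as [H1 H2].
  assert (n < Int_part r + 1)%Z by (apply lt_IZR; rewrite plus_IZR; simpl; lra).
  assert (Int_part r < m)%Z by (apply lt_IZR; lra).
  lia.
Qed.

Lemma interior_cell (a d b e c f : Z) (X Y : R) :
  IZR a < X < IZR d -> IZR b < Y < IZR e -> IZR c < X + Y < IZR f ->
  exists t, cell_in_hex a d b e c f t /\ in_cell t X Y.
Proof.
  intros HX HY HS.
  destruct (base_Int_part X) as [X1 X2]; destruct (base_Int_part Y) as [Y1 Y2].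
  pose proof (Int_part_between _ _ _ HX) as Bi; pose proof (Int_part_between _ _ _ HY) as Bj.
  set (i := Int_part X) in *; set (j := Int_part Y) in *.
  destruct (Rle_dec (X + Y) (IZR i + IZR j + 1)) as [Hup|Hdown].
  - assert (c < i + j + 1 /\ i + j < f)%Z as [? ?].
    { split; apply lt_IZR; rewrite ?plus_IZR; simpl; lra. }
    exists (Up i j); split; [|simpl; lra].
    intros p Hp; simpl in Hp; unfold hex_point.
    destruct Hp as [<-|[<-|[<-|[]]]]; simpl; lia.
  - assert (c < i + j + 2 /\ i + j + 1 < f)%Z as [? ?].
    { split; apply lt_IZR; rewrite ?plus_IZR; simpl; lra. }
    exists (Down i j); split; [|simpl; lra].
    intros p Hp; simpl in Hp; unfold hex_point.
    destruct Hp as [<-|[<-|[<-|[]]]]; simpl; lia.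
Qed.

Definition int_bounds_kept (A B : R) : Prop :=
  forall n : Z, (IZR n <= A -> IZR n <= B) /\ (A <= IZR n -> B <= IZR n).

Lemma small_shift_keeps_int_bounds_pos (A D : R) : 0 < D ->
  exists tau, 0 < tau /\ forall t, 0 < t <= tau -> int_bounds_kept (A + t * D) A.
Proof.
  intros HD; destruct (base_Int_part A) as [F1 F2].
  set (g := IZR (Int_part A) + 1 - A).
  exists (g / (D + 1)); split; [apply Rdiv_lt_0_compat; unfold g; lra|].
  intros t [Ht1 Ht2] n.
  assert (Hg : g / (D + 1) * (D + 1) = g) by (field; lra).
  assert (t * D < g) by nra.
  split; intros Hn; [|nra].
  assert (Hn' : (n <= Int_part A)%Z)
    by (apply Z.lt_succ_r, lt_IZR; rewrite succ_IZR; unfold g in *; nra).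
  apply IZR_le in Hn'; lra.
Qed.

Lemma small_shift_keeps_int_bounds (A D : R) :
  exists tau, 0 < tau /\ forall t, 0 < t <= tau -> int_bounds_kept (A + t * D) A.
Proof.
  destruct (Rtotal_order D 0) as [HD|[HD|HD]].
  - destruct (small_shift_keeps_int_bounds_pos (- A) (- D)) as (tau & Htau & H); [lra|].
    exists tau; split; [exact Htau|]; intros t Ht n.
    destruct (H t Ht (- n)%Z) as [H1 H2]; rewrite opp_IZR in H1, H2.
    split; intros; [enough (- A <= - IZR n) by lra; apply H2; lra
                   |enough (- IZR n <= - A) by lra; apply H1; lra].
  - exists 1; split; [lra|]; intros t _ n; subst D; rewrite Rmult_0_r, Rplus_0_r; tauto.
  - apply small_shift_keeps_int_bounds_pos; exact HD.
Qed.

Lemma hexagon_cell_cover (a d b e c f : Z) (X Y Xs Ys : R) :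
  IZR a <= X <= IZR d -> IZR b <= Y <= IZR e -> IZR c <= X + Y <= IZR f ->
  IZR a < Xs < IZR d -> IZR b < Ys < IZR e -> IZR c < Xs + Ys < IZR f ->
  exists t, cell_in_hex a d b e c f t /\ in_cell t X Y.
Proof.
  intros H1 H2 H3 S1 S2 S3.
  (* push (X, Y) slightly towards (Xs, Ys): a cell of the pushed point also contains (X, Y) *)
  destruct (small_shift_keeps_int_bounds X (Xs - X)) as (t1 & T1 & N1).
  destruct (small_shift_keeps_int_bounds Y (Ys - Y)) as (t2 & T2 & N2).
  destruct (small_shift_keeps_int_bounds (X + Y) (Xs + Ys - (X + Y))) as (t3 & T3 & N3).
  set (t := Rmin (Rmin t1 t2) (Rmin t3 1)).
  assert (t <= t1 /\ t <= t2 /\ t <= t3 /\ t <= 1) as (E1 & E2 & E3 & E4).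
  { unfold t; repeat split.
    - eapply Rle_trans; apply Rmin_l.
    - eapply Rle_trans; [apply Rmin_l|apply Rmin_r].
    - eapply Rle_trans; [apply Rmin_r|apply Rmin_l].
    - eapply Rle_trans; apply Rmin_r. }
  assert (0 < t) by (unfold t; repeat apply Rmin_glb_lt; lra).
  specialize (N1 t ltac:(lra)); specialize (N2 t ltac:(lra)); specialize (N3 t ltac:(lra)).
  set (X0 := X + t * (Xs - X)) in N1; set (Y0 := Y + t * (Ys - Y)) in N2.
  replace (X + Y + t * (Xs + Ys - (X + Y))) with (X0 + Y0) in N3 by (unfold X0, Y0; ring).
  destruct (interior_cell a d b e c f X0 Y0) as (c0 & Hc0 & Hin); try (unfold X0, Y0; nra).
  exists c0; split; [exact Hc0|].
  destruct c0 as [i j|i j]; simpl in *; destruct Hin as (I1 & I2 & I3).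
  - destruct (N1 i) as [K1 _]; destruct (N2 j) as [K2 _].
    destruct (N3 (i + j + 1)%Z) as [_ K3]; rewrite !plus_IZR in K3.
    repeat split; [apply K1|apply K2|apply K3]; assumption.
  - destruct (N1 (i + 1)%Z) as [_ K1]; destruct (N2 (j + 1)%Z) as [_ K2].
    destruct (N3 (i + j + 1)%Z) as [K3 _]; rewrite plus_IZR in K1, K2; rewrite !plus_IZR in K3.
    repeat split; [apply K1|apply K2|apply K3]; assumption.
Qed.

Lemma centroid_strict_bound (al be h X1 Y1 X2 Y2 X3 Y3 : R) :
  al <> 0 \/ be <> 0 ->
  al * X1 + be * Y1 <= h -> al * X2 + be * Y2 <= h -> al * X3 + be * Y3 <= h ->
  (X2 - X1) * (Y3 - Y1) - (X3 - X1) * (Y2 - Y1) <> 0 ->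
  al * ((X1 + X2 + X3) / 3) + be * ((Y1 + Y2 + Y3) / 3) < h.
Proof.
  intros Hab H1 H2 H3 Hdet; apply Rnot_le_lt; intros Hc.
  assert (E2 : al * (X2 - X1) = - be * (Y2 - Y1)) by lra.
  assert (E3 : al * (X3 - X1) = - be * (Y3 - Y1)) by lra.
  set (D := (X2 - X1) * (Y3 - Y1) - (X3 - X1) * (Y2 - Y1)) in Hdet.
  assert (Ha : al * D = 0).
  { replace (al * D) with (al * (X2 - X1) * (Y3 - Y1) - al * (X3 - X1) * (Y2 - Y1))
      by (unfold D; ring).
    rewrite E2, E3; ring. }
  assert (Hb : be * D = 0).
  { replace (be * D) with ((X2 - X1) * (be * (Y3 - Y1)) - (X3 - X1) * (be * (Y2 - Y1)))
      by (unfold D; ring).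
    replace (be * (Y3 - Y1)) with (- (al * (X3 - X1))) by lra.
    replace (be * (Y2 - Y1)) with (- (al * (X2 - X1))) by lra; ring. }
  destruct Hab as [Hab|Hab]; [apply Rmult_integral in Ha|apply Rmult_integral in Hb]; tauto.
Qed.

Lemma hexagon_interior (o u v : V3) (a d b e c f : Z) (p1 p2 p3 : V3) :
  hexagon o u v a d b e c f p1 -> hexagon o u v a d b e c f p2 -> hexagon o u v a d b e c f p3 ->
  cross (vsub p2 p1) (vsub p3 p1) <> vzero ->
  exists Xs Ys, IZR a < Xs < IZR d /\ IZR b < Ys < IZR e /\ IZR c < Xs + Ys < IZR f.
Proof.
  intros (X1 & Y1 & -> & A1 & B1 & C1) (X2 & Y2 & -> & A2 & B2 & C2)
    (X3 & Y3 & -> & A3 & B3 & C3) Hc.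
  assert (Hdet : (X2 - X1) * (Y3 - Y1) - (X3 - X1) * (Y2 - Y1) <> 0).
  { intro E; apply Hc; rewrite cross_pt2, E; vring. }
  set (Xs := (X1 + X2 + X3) / 3); set (Ys := (Y1 + Y2 + Y3) / 3).
  assert (K : forall al be h, al <> 0 \/ be <> 0 -> al * X1 + be * Y1 <= h ->
                al * X2 + be * Y2 <= h -> al * X3 + be * Y3 <= h -> al * Xs + be * Ys < h)
    by (intros; apply centroid_strict_bound; assumption).
  exists Xs, Ys.
  repeat split.
  - enough (-1 * Xs + 0 * Ys < - IZR a) by lra; apply K; lra.
  - enough (1 * Xs + 0 * Ys < IZR d) by lra; apply K; lra.
  - enough (0 * Xs + -1 * Ys < - IZR b) by lra; apply K; lra.
  - enough (0 * Xs + 1 * Ys < IZR e) by lra; apply K; lra.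
  - enough (-1 * Xs + -1 * Ys < - IZR c) by lra; apply K; lra.
  - enough (1 * Xs + 1 * Ys < IZR f) by lra; apply K; lra.
Qed.

Definition zrange (lo hi : Z) : list Z :=
  map (fun n => lo + Z.of_nat n)%Z (seq 0 (Z.to_nat (hi - lo + 1))).

Lemma In_zrange (lo hi n : Z) : In n (zrange lo hi) <-> (lo <= n <= hi)%Z.
Proof.
  unfold zrange; rewrite in_map_iff; split.
  - intros (m & <- & Hm); apply in_seq in Hm; lia.
  - intros H; exists (Z.to_nat (n - lo)); split; [lia|apply in_seq; lia].
Qed.

Definition hex_pointb (a d b e c f : Z) (p : Z * Z) : bool :=
  ((a <=? fst p) && (fst p <=? d) && (b <=? snd p) && (snd p <=? e) &&
   (c <=? fst p + snd p) && (fst p + snd p <=? f))%Z.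

Lemma hex_pointb_spec (a d b e c f : Z) (p : Z * Z) :
  hex_pointb a d b e c f p = true <-> hex_point a d b e c f p.
Proof. unfold hex_pointb, hex_point; rewrite !Bool.andb_true_iff, !Z.leb_le; tauto. Qed.

Definition hexagon_cells (a d b e c f : Z) : list ltri :=
  filter (fun t => forallb (hex_pointb a d b e c f) (cell_vertices t))
    (flat_map (fun i => flat_map (fun j => Up i j :: Down i j :: nil) (zrange b e)) (zrange a d)).

Lemma In_hexagon_cells (a d b e c f : Z) (t : ltri) :
  In t (hexagon_cells a d b e c f) <-> cell_in_hex a d b e c f t.
Proof.
  unfold hexagon_cells, cell_in_hex; rewrite filter_In, forallb_forall.
  setoid_rewrite hex_pointb_spec; split; [tauto|intros Ht; split; [|exact Ht]].
  apply in_flat_map.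
  destruct t as [i j|i j];
    [ destruct (Ht _ (or_introl eq_refl)) as ((? & ?) & (? & ?) & _)
    | destruct (Ht _ (or_introl eq_refl)) as (_ & (? & ?) & _);
      destruct (Ht _ (or_intror (or_introl eq_refl))) as ((? & ?) & _) ];
    simpl in *; exists i; (split; [apply In_zrange; lia|]);
    apply in_flat_map; exists j; (split; [apply In_zrange; lia|]); simpl; tauto.
Qed.

Lemma hexagon_polyiamond (o u v : V3) (a d b e c f : Z) (p1 p2 p3 : V3) :
  lattice_frame u v ->
  hexagon o u v a d b e c f p1 -> hexagon o u v a d b e c f p2 -> hexagon o u v a d b e c f p3 ->
  cross (vsub p2 p1) (vsub p3 p1) <> vzero ->
  convex_polyiamond (hexagon o u v a d b e c f).
Proof.
  intros (Hu & Hv & Huv) H1 H2 H3 Hc.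
  destruct (hexagon_interior o u v a d b e c f p1 p2 p3 H1 H2 H3 Hc) as (Xs & Ys & S1 & S2 & S3).
  split; [apply hexagon_convex|].
  exists o, u, v, (hexagon_cells a d b e c f); do 3 (split; [assumption|]); split.
  - destruct H1 as (X & Y & _ & B1 & B2 & B3).
    destruct (hexagon_cell_cover a d b e c f X Y Xs Ys) as (t & Ht & _); try assumption.
    apply In_hexagon_cells in Ht; intros E; rewrite E in Ht; destruct Ht.
  - intros x; split.
    + intros (X & Y & -> & B1 & B2 & B3).
      destruct (hexagon_cell_cover a d b e c f X Y Xs Ys) as (t & Ht & Hin); try assumption.
      exists t; split; [apply In_hexagon_cells, Ht|apply hull_cell; exists X, Y; auto].
    + intros (t & Ht & Hx); apply In_hexagon_cells in Ht; apply hull_cell in Hx.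
      destruct Hx as (X & Y & -> & Hin); exists X, Y; split; [reflexivity|].
      exact (cell_in_hex_bounds _ _ _ _ _ _ _ _ _ Ht Hin).
Qed.

Lemma hexagon_lpt (o u v : V3) (a d b e c f i j : Z) :
  lattice_frame u v -> hexagon o u v a d b e c f (lpt o u v i j) -> hex_point a d b e c f (i, j).
Proof.
  intros Hf (X & Y & E & B1 & B2 & B3).
  destruct (pt2_inj o u v _ _ _ _ Hf E) as [<- <-]; rewrite <- plus_IZR in B3.
  unfold hex_point; simpl; repeat split; apply le_IZR; lra.
Qed.

Lemma convex_pt2_segment (Q : region) (o u v : V3) (X1 Y1 X2 Y2 s : R) :
  convex Q -> Q (pt2 o u v X1 Y1) -> Q (pt2 o u v X2 Y2) -> 0 <= s <= 1 ->
  Q (pt2 o u v (X1 + s * (X2 - X1)) (Y1 + s * (Y2 - Y1))).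
Proof.
  intros HQ H1 H2 Hs.
  replace (pt2 o u v (X1 + s * (X2 - X1)) (Y1 + s * (Y2 - Y1))) with
    (vadd (pt2 o u v X1 Y1) (vscale s (vsub (pt2 o u v X2 Y2) (pt2 o u v X1 Y1))))
    by (unfold pt2; vring).
  apply HQ; assumption.
Qed.

Lemma interval_param (lo hi x : R) : lo <= x <= hi ->
  exists s, 0 <= s <= 1 /\ x = lo + s * (hi - lo).
Proof.
  intros Hx; destruct (Req_dec lo hi) as [<-|Hne].
  - exists 0; split; lra.
  - assert (Hlt : lo < hi) by lra.
    exists ((x - lo) / (hi - lo)).
    assert (E : (x - lo) / (hi - lo) * (hi - lo) = x - lo) by (field; lra).
    split; [split; nra|lra].
Qed.

Lemma convex_pt2_line (Q : region) (o u v : V3) (lam mu X1 X2 X : R) :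
  convex Q -> Q (pt2 o u v X1 (lam * X1 + mu)) -> Q (pt2 o u v X2 (lam * X2 + mu)) ->
  X1 <= X <= X2 -> Q (pt2 o u v X (lam * X + mu)).
Proof.
  intros HQ H1 H2 HX; destruct (interval_param _ _ _ HX) as (s & Hs & ->).
  replace (lam * (X1 + s * (X2 - X1)) + mu) with
    ((lam * X1 + mu) + s * ((lam * X2 + mu) - (lam * X1 + mu))) by ring.
  apply convex_pt2_segment; assumption.
Qed.

Lemma convex_pt2_vertical (Q : region) (o u v : V3) (X Y1 Y2 Y : R) :
  convex Q -> Q (pt2 o u v X Y1) -> Q (pt2 o u v X Y2) -> Y1 <= Y <= Y2 -> Q (pt2 o u v X Y).
Proof.
  intros HQ H1 H2 HY; destruct (interval_param _ _ _ HY) as (s & Hs & ->).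
  replace X with (X + s * (X - X)) at 1 by ring.
  apply convex_pt2_segment; assumption.
Qed.

Lemma hexagon_sub_convex (Q : region) (o u v : V3) (a d b e c f : Z) :
  convex Q ->
  Q (lpt o u v a (c - a)) -> Q (lpt o u v (c - b) b) -> Q (lpt o u v d b) ->
  Q (lpt o u v d (f - d)) -> Q (lpt o u v (f - e) e) -> Q (lpt o u v a e) ->
  forall x, hexagon o u v a d b e c f x -> Q x.
Proof.
  intros HQ K1 K2 K3 K4 K5 K6 x (X & Y & -> & B1 & B2 & B3).
  unfold lpt in *; fold (pt2 o u v) in *; rewrite !minus_IZR in *.
  set (a' := IZR a) in *; set (d' := IZR d) in *; set (b' := IZR b) in *;
  set (e' := IZR e) in *; set (c' := IZR c) in *; set (f' := IZR f) in *.
  assert (Lo : Q (pt2 o u v X (Rmax b' (c' - X)))).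
  { destruct (Rle_dec X (c' - b')).
    - rewrite Rmax_right by lra; replace (c' - X) with (-1 * X + c') by ring.
      apply (convex_pt2_line Q o u v (-1) c' a' (c' - b')); try assumption; try lra;
        [replace (-1 * a' + c') with (c' - a') by ring
        |replace (-1 * (c' - b') + c') with b' by ring];
        assumption.
    - rewrite Rmax_left by lra; replace b' with (0 * X + b') by ring.
      apply (convex_pt2_line Q o u v 0 b' (c' - b') d'); try assumption; try lra;
        replace (0 * _ + b') with b' by ring; assumption. }
  assert (Hi : Q (pt2 o u v X (Rmin e' (f' - X)))).
  { destruct (Rle_dec X (f' - e')).
    - rewrite Rmin_left by lra; replace e' with (0 * X + e') by ring.
      apply (convex_pt2_line Q o u v 0 e' a' (f' - e')); try assumption; try lra;
        replace (0 * _ + e') with e' by ring; assumption.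
    - rewrite Rmin_right by lra; replace (f' - X) with (-1 * X + f') by ring.
      apply (convex_pt2_line Q o u v (-1) f' (f' - e') d'); try assumption; try lra;
        [replace (-1 * (f' - e') + f') with e' by ring
        |replace (-1 * d' + f') with (f' - d') by ring];
        assumption. }
  apply (convex_pt2_vertical Q o u v X _ _ Y HQ Lo Hi).
  split; [apply Rmax_lub|apply Rmin_glb]; lra.
Qed.

Lemma hexagon_lpt_intro (o u v : V3) (a d b e c f i j : Z) :
  hex_point a d b e c f (i, j) -> hexagon o u v a d b e c f (lpt o u v i j).
Proof.
  intros ((H1 & H2) & (H3 & H4) & (H5 & H6)); simpl in *.
  exists (IZR i), (IZR j); split; [reflexivity|rewrite <- plus_IZR].
  repeat split; apply IZR_le; assumption.
Qed.

Lemma cell_in_hex_nondegenerate (a d b e c f : Z) (t : ltri) :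
  cell_in_hex a d b e c f t -> (a < d /\ b < e /\ c < f)%Z.
Proof.
  intros Ht; destruct t as [i j|i j];
    pose proof (Ht _ (or_introl eq_refl)) as H1;
    pose proof (Ht _ (or_intror (or_introl eq_refl))) as H2;
    pose proof (Ht _ (or_intror (or_intror (or_introl eq_refl)))) as H3;
    unfold hex_point in *; simpl in *; lia.
Qed.

(** * Convex polyiamonds are lattice hexagons *)

Definition tiling (P : region) (o u v : V3) (T : list ltri) : Prop :=
  convex P /\ lattice_frame u v /\ T <> nil /\
  same_region P (fun x => exists t, In t T /\ hull (ltri_pts o u v t) x).

Section Tiling.

Variables (P : region) (o u v : V3) (T : list ltri).
Hypothesis HT : tiling P o u v T.

Lemma tiling_point (x : V3) :
  P x -> exists t X Y, In t T /\ x = pt2 o u v X Y /\ in_cell t X Y.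
Proof.
  destruct HT as (_ & _ & _ & HP); intros Hx; apply HP in Hx.
  destruct Hx as (t & Ht & Hx); apply hull_cell in Hx.
  destruct Hx as (X & Y & -> & Hin); exists t, X, Y; auto.
Qed.

Lemma tiling_vertex (t : ltri) (p : Z * Z) :
  In t T -> In p (cell_vertices t) -> P (lpt o u v (fst p) (snd p)).
Proof.
  destruct HT as (_ & _ & _ & HP); intros Ht Hp; apply HP; exists t; split; [exact Ht|].
  apply hull_In; rewrite ltri_pts_vertices; apply in_map_iff; exists p; auto.
Qed.

Lemma tiling_open_cell (s : ltri) (X Y : R) :
  P (pt2 o u v X Y) -> open_cell s X Y ->
  forall p, In p (cell_vertices s) -> P (lpt o u v (fst p) (snd p)).
Proof.
  intros HP Hs p Hp.
  destruct (tiling_point _ HP) as (t & X' & Y' & Ht & E & Hin).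
  destruct (pt2_inj o u v X Y X' Y' (proj1 (proj2 HT)) E) as [<- <-].
  rewrite (open_cell_unique s t X Y Hs Hin) in Hp.
  exact (tiling_vertex t p Ht Hp).
Qed.

Lemma tiling_corner_step (m n i0 y : Z) :
  P (lpt o u v m y) -> P (lpt o u v i0 n) -> (i0 < m)%Z -> (n < y)%Z -> P (lpt o u v m (y - 1)).
Proof.
  intros Hmy Hn Hi Hy.
  (* moving from (m, y) towards (i0, n) we enter the open triangle Down (m - 1) (y - 1) *)
  set (K := IZR (m - i0) + IZR (y - n)).
  assert (HK : 2 <= K) by (unfold K; rewrite <- plus_IZR; apply IZR_le; lia).
  set (eps := / (K + 1)).
  assert (Heps : 0 < eps /\ eps * K < 1).
  { unfold eps; split; [apply Rinv_0_lt_compat; lra|].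
    apply (Rmult_lt_reg_l (K + 1)); [lra|].
    rewrite <- Rmult_assoc, Rinv_r; lra. }
  set (X := IZR m + eps * (IZR i0 - IZR m)); set (Y := IZR y + eps * (IZR n - IZR y)).
  assert (HXY : P (pt2 o u v X Y)).
  { replace (pt2 o u v X Y) with
      (vadd (lpt o u v m y) (vscale eps (vsub (lpt o u v i0 n) (lpt o u v m y))))
      by (unfold X, Y, pt2, lpt; vring).
    apply (proj1 HT); [exact Hmy|exact Hn|split; nra]. }
  assert (Hopen : open_cell (Down (m - 1) (y - 1)) X Y).
  { assert (IZR i0 < IZR m) by (apply IZR_lt; lia).
    assert (IZR n < IZR y) by (apply IZR_lt; lia).
    unfold K in Heps; rewrite !minus_IZR in Heps.
    unfold X, Y; simpl; rewrite !minus_IZR; repeat split; nra. }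
  replace m with (m - 1 + 1)%Z by ring.
  apply (tiling_open_cell _ X Y HXY Hopen ((m - 1 + 1)%Z, (y - 1)%Z)); simpl; auto.
Qed.

Lemma tiling_corner (m n i0 j0 : Z) :
  P (lpt o u v m j0) -> P (lpt o u v i0 n) -> (i0 <= m)%Z -> (n <= j0)%Z -> P (lpt o u v m n).
Proof.
  intros Hm Hn Hi Hj.
  destruct (Z.eq_dec i0 m) as [<-|Hne]; [exact Hn|].
  replace n with (j0 - Z.of_nat (Z.to_nat (j0 - n)))%Z by lia.
  assert (Hk : (Z.of_nat (Z.to_nat (j0 - n)) <= j0 - n)%Z) by lia.
  induction (Z.to_nat (j0 - n)) as [|k IH].
  - replace (j0 - Z.of_nat 0)%Z with j0 by lia; exact Hm.
  - replace (j0 - Z.of_nat (S k))%Z with (j0 - Z.of_nat k - 1)%Z by lia.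
    apply (tiling_corner_step m n i0); [apply IH; lia|exact Hn|lia|lia].
Qed.

Definition tight_hexagon (a d b e c f : Z) : Prop :=
  (forall x, P x -> hexagon o u v a d b e c f x) /\
  (exists j, P (lpt o u v a j)) /\ (exists j, P (lpt o u v d j)) /\
  (exists i, P (lpt o u v i b)) /\ (exists i, P (lpt o u v i e)) /\
  (exists i, P (lpt o u v i (c - i))) /\ (exists i, P (lpt o u v i (f - i))).

Lemma tight_hexagon_corner (a d b e c f : Z) :
  tight_hexagon a d b e c f -> P (lpt o u v d b).
Proof.
  intros (Hsub & _ & (j0 & Hd) & (i0 & Hb) & _).
  destruct (hexagon_lpt o u v a d b e c f d j0 (proj1 (proj2 HT)) (Hsub _ Hd)) as (_ & ? & _).
  destruct (hexagon_lpt o u v a d b e c f i0 b (proj1 (proj2 HT)) (Hsub _ Hb)) as (? & _).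
  simpl in *; apply (tiling_corner d b i0 j0); auto; lia.
Qed.

End Tiling.

Definition rot_cell (t : ltri) : ltri :=
  match t with
  | Up i j => Down (i + j) (- i - 1)
  | Down i j => Up (i + j + 1) (- i - 1)
  end.

Lemma in_cell_rot (t : ltri) (X Y : R) : in_cell (rot_cell t) X Y <-> in_cell t (- Y) (X + Y).
Proof. destruct t as [i j|i j]; simpl; rewrite ?plus_IZR, ?minus_IZR, ?opp_IZR; lra. Qed.

Lemma pt2_rot (o u v : V3) (X Y : R) : pt2 o v (vsub v u) X Y = pt2 o u v (- Y) (X + Y).
Proof. unfold pt2; vring. Qed.

Lemma lpt_rot (o u v : V3) (i j : Z) : lpt o v (vsub v u) i j = lpt o u v (- j) (i + j).
Proof. unfold lpt; rewrite opp_IZR, plus_IZR; vring. Qed.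

Lemma lattice_frame_rot (u v : V3) : lattice_frame u v -> lattice_frame v (vsub v u).
Proof.
  intros (Hu & Hv & Huv); unfold lattice_frame.
  replace (dot (vsub v u) (vsub v u)) with (dot v v - 2 * dot u v + dot u u)
    by (vunfold; simpl; ring).
  replace (dot v (vsub v u)) with (dot v v - dot u v) by (vunfold; simpl; ring).
  rewrite Hu, Hv, Huv; repeat split; field.
Qed.

Lemma tiling_rot (P : region) (o u v : V3) (T : list ltri) :
  tiling P o u v T -> tiling P o v (vsub v u) (map rot_cell T).
Proof.
  intros (Hc & Hf & HT & HP); split; [exact Hc|split; [apply lattice_frame_rot, Hf|split]].
  { destruct T; [contradiction|discriminate]. }
  intros x; rewrite (HP x); split.
  - intros (t & Ht & Hx); apply hull_cell in Hx; destruct Hx as (X & Y & -> & Hin).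
    exists (rot_cell t); split; [apply in_map, Ht|apply hull_cell].
    exists (X + Y), (- X); rewrite pt2_rot, in_cell_rot.
    replace (- - X) with X by ring; replace (X + Y + - X) with Y by ring; auto.
  - intros (t' & Ht' & Hx); apply in_map_iff in Ht'; destruct Ht' as (t & <- & Ht).
    apply hull_cell in Hx; destruct Hx as (X & Y & -> & Hin).
    exists t; split; [exact Ht|apply hull_cell].
    exists (- Y), (X + Y); rewrite pt2_rot; split; [reflexivity|apply in_cell_rot, Hin].
Qed.

Lemma hexagon_rot (o u v : V3) (a d b e c f : Z) (x : V3) :
  hexagon o u v a d b e c f x -> hexagon o v (vsub v u) c f (- d) (- a) b e x.
Proof.
  intros (X & Y & -> & B1 & B2 & B3); exists (X + Y), (- X).
  rewrite pt2_rot, !opp_IZR; replace (- - X) with X by ring; replace (X + Y + - X) with Y by ring.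
  repeat split; (reflexivity || lra).
Qed.

Lemma lpt_congr (Q : region) (o u v : V3) (i j i' j' : Z) :
  Q (lpt o u v i j) -> i = i' -> j = j' -> Q (lpt o u v i' j').
Proof. intros H <- <-; exact H. Qed.

Lemma tight_hexagon_rot (P : region) (o u v : V3) (a d b e c f : Z) :
  tight_hexagon P o u v a d b e c f -> tight_hexagon P o v (vsub v u) c f (- d) (- a) b e.
Proof.
  intros (Hsub & (jA & HA) & (jD & HD) & (iB & HB) & (iE & HE) & (iC & HC) & (iF & HF)).
  split; [intros x Hx; apply hexagon_rot, Hsub, Hx|].
  repeat split; [exists (- iC)%Z; rewrite lpt_rot; apply (lpt_congr _ _ _ _ _ _ _ _ HC)
                | exists (- iF)%Z; rewrite lpt_rot; apply (lpt_congr _ _ _ _ _ _ _ _ HF)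
                | exists (d + jD)%Z; rewrite lpt_rot; apply (lpt_congr _ _ _ _ _ _ _ _ HD)
                | exists (a + jA)%Z; rewrite lpt_rot; apply (lpt_congr _ _ _ _ _ _ _ _ HA)
                | exists (iB + b)%Z; rewrite lpt_rot; apply (lpt_congr _ _ _ _ _ _ _ _ HB)
                | exists (iE + e)%Z; rewrite lpt_rot; apply (lpt_congr _ _ _ _ _ _ _ _ HE)]; lia.
Qed.

(* Each corner of the hexagon is the corner (d, b) of the hexagon in one of the frames
   obtained by rotating (u, v) by a multiple of 60 degrees. *)
Lemma tight_hexagon_sub (P : region) (o u v : V3) (T : list ltri) (a d b e c f : Z) :
  tiling P o u v T -> tight_hexagon P o u v a d b e c f ->
  forall x, hexagon o u v a d b e c f x -> P x.
Proof.
  intros H0 G0.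
  pose proof (tiling_rot _ _ _ _ _ H0) as H1; pose proof (tiling_rot _ _ _ _ _ H1) as H2;
  pose proof (tiling_rot _ _ _ _ _ H2) as H3; pose proof (tiling_rot _ _ _ _ _ H3) as H4;
  pose proof (tiling_rot _ _ _ _ _ H4) as H5.
  pose proof (tight_hexagon_rot _ _ _ _ _ _ _ _ _ _ G0) as G1;
  pose proof (tight_hexagon_rot _ _ _ _ _ _ _ _ _ _ G1) as G2;
  pose proof (tight_hexagon_rot _ _ _ _ _ _ _ _ _ _ G2) as G3;
  pose proof (tight_hexagon_rot _ _ _ _ _ _ _ _ _ _ G3) as G4;
  pose proof (tight_hexagon_rot _ _ _ _ _ _ _ _ _ _ G4) as G5.
  pose proof (tight_hexagon_corner _ _ _ _ _ H0 _ _ _ _ _ _ G0) as K0;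
  pose proof (tight_hexagon_corner _ _ _ _ _ H1 _ _ _ _ _ _ G1) as K1;
  pose proof (tight_hexagon_corner _ _ _ _ _ H2 _ _ _ _ _ _ G2) as K2;
  pose proof (tight_hexagon_corner _ _ _ _ _ H3 _ _ _ _ _ _ G3) as K3;
  pose proof (tight_hexagon_corner _ _ _ _ _ H4 _ _ _ _ _ _ G4) as K4;
  pose proof (tight_hexagon_corner _ _ _ _ _ H5 _ _ _ _ _ _ G5) as K5.
  repeat match goal with K : context [lpt _ ?v (vsub ?v _) _ _] |- _ => rewrite lpt_rot in K end.
  apply (hexagon_sub_convex P o u v a d b e c f (proj1 H0));
    [ apply (lpt_congr _ _ _ _ _ _ _ _ K4) | apply (lpt_congr _ _ _ _ _ _ _ _ K5)
    | exact K0 | apply (lpt_congr _ _ _ _ _ _ _ _ K1)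
    | apply (lpt_congr _ _ _ _ _ _ _ _ K2) | apply (lpt_congr _ _ _ _ _ _ _ _ K3) ]; lia.
Qed.

Lemma list_argmin {A : Type} (g : A -> Z) (l : list A) :
  l <> nil -> exists x, In x l /\ forall y, In y l -> (g x <= g y)%Z.
Proof.
  induction l as [|a l IH]; intros Hl; [contradiction|].
  destruct l as [|b l].
  - exists a; split; [left; reflexivity|intros y [<-|[]]; lia].
  - destruct IH as (x & Hx & Hmin); [discriminate|].
    destruct (Z.le_gt_cases (g a) (g x)).
    + exists a; split; [left; reflexivity|].
      intros y [<-|Hy]; [lia|specialize (Hmin y Hy); lia].
    + exists x; split; [right; exact Hx|].
      intros y [<-|Hy]; [lia|exact (Hmin y Hy)].
Qed.

Lemma tiling_tight_hexagon (P : region) (o u v : V3) (T : list ltri) :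
  tiling P o u v T -> exists a d b e c f, tight_hexagon P o u v a d b e c f.
Proof.
  intros H; set (V := flat_map cell_vertices T).
  assert (HV : V <> nil).
  { destruct H as (_ & _ & HT & _); destruct T as [|[] T]; [contradiction|discriminate..]. }
  assert (HVP : forall p, In p V -> P (lpt o u v (fst p) (snd p))).
  { intros p Hp; apply in_flat_map in Hp; destruct Hp as (t & Ht & Hp).
    exact (tiling_vertex P o u v T H t p Ht Hp). }
  destruct (list_argmin fst V HV) as (pa & Ha & Ma).
  destruct (list_argmin (fun p => - fst p)%Z V HV) as (pd & Hd & Md).
  destruct (list_argmin snd V HV) as (pb & Hb & Mb).
  destruct (list_argmin (fun p => - snd p)%Z V HV) as (pe & He & Me).
  destruct (list_argmin (fun p => fst p + snd p)%Z V HV) as (pc & Hc & Mc).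
  destruct (list_argmin (fun p => - (fst p + snd p))%Z V HV) as (pf & Hf & Mf).
  exists (fst pa), (fst pd), (snd pb), (snd pe), (fst pc + snd pc)%Z, (fst pf + snd pf)%Z.
  split; [|repeat split].
  - intros x Hx; destruct (tiling_point P o u v T H x Hx) as (t & X & Y & Ht & -> & Hin).
    exists X, Y; split; [reflexivity|]; apply (cell_in_hex_bounds _ _ _ _ _ _ t); [|exact Hin].
    intros p Hp; assert (Hq : In p V) by (apply in_flat_map; exists t; auto).
    specialize (Ma p Hq); specialize (Md p Hq); specialize (Mb p Hq);
    specialize (Me p Hq); specialize (Mc p Hq); specialize (Mf p Hq).
    unfold hex_point; lia.
  - exists (snd pa); exact (HVP pa Ha).
  - exists (snd pd); exact (HVP pd Hd).
  - exists (fst pb); exact (HVP pb Hb).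
  - exists (fst pe); exact (HVP pe He).
  - exists (fst pc); apply (lpt_congr _ _ _ _ _ _ _ _ (HVP pc Hc)); lia.
  - exists (fst pf); apply (lpt_congr _ _ _ _ _ _ _ _ (HVP pf Hf)); lia.
Qed.

Lemma tiling_hexagon (P : region) (o u v : V3) (T : list ltri) :
  tiling P o u v T -> exists a d b e c f, same_region P (hexagon o u v a d b e c f).
Proof.
  intros H; destruct (tiling_tight_hexagon P o u v T H) as (a & d & b & e & c & f & G).
  exists a, d, b, e, c, f; intros x; split; [apply (proj1 G)|].
  exact (tight_hexagon_sub P o u v T a d b e c f H G x).
Qed.

(** * Facets of polyhedra *)

Definition polyhedron (cs : list (V3 * R)) (y : V3) : Prop :=
  forall g h, In (g, h) cs -> dot g y <= h.

Lemma dot_vadd_vscale (g y z : V3) (s : R) : dot g (vadd y (vscale s z)) = dot g y + s * dot g z.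
Proof. vunfold; simpl; ring. Qed.

Lemma dot_vsub (g a b : V3) : dot g (vsub a b) = dot g a - dot g b.
Proof. vunfold; simpl; ring. Qed.

Lemma polyhedron_convex (cs : list (V3 * R)) : convex (polyhedron cs).
Proof.
  intros x y t Hx Hy Ht g h Hin; rewrite dot_vadd_vscale, dot_vsub.
  pose proof (Hx g h Hin); pose proof (Hy g h Hin); nra.
Qed.

Lemma polyhedron_perturb (cs : list (V3 * R)) (y z : V3) :
  polyhedron cs y -> (forall g h, In (g, h) cs -> dot g y = h -> dot g z <= 0) ->
  exists eps0, 0 < eps0 /\ forall eps, 0 <= eps <= eps0 -> polyhedron cs (vadd y (vscale eps z)).
Proof.
  induction cs as [|[g h] cs IH]; intros Hy Hz.
  { exists 1; split; [lra|intros eps _ g h []]. }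
  destruct IH as (eps1 & He1 & H1).
  { intros g' h' Hin; apply Hy; right; exact Hin. }
  { intros g' h' Hin; apply Hz; right; exact Hin. }
  assert (Hgh : dot g y <= h) by (apply Hy; left; reflexivity).
  set (eps2 := (h - dot g y) / (Rabs (dot g z) + 1)).
  assert (He2 : 0 <= eps2 /\ eps2 * dot g z <= h - dot g y).
  { pose proof (Rabs_pos (dot g z)); pose proof (Rle_abs (dot g z)).
    assert (E : eps2 * (Rabs (dot g z) + 1) = h - dot g y) by (unfold eps2; field; lra).
    split; nra. }
  destruct (Req_dec (dot g y) h) as [Htight|Hslack].
  - exists eps1; split; [exact He1|]; intros eps Heps g' h' [E|Hin].
    + injection E as <- <-; rewrite dot_vadd_vscale.
      pose proof (Hz g h (or_introl eq_refl) Htight); nra.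
    + apply (H1 eps Heps g' h' Hin).
  - assert (0 < eps2).
    { unfold eps2; apply Rdiv_lt_0_compat; [lra|pose proof (Rabs_pos (dot g z)); lra]. }
    exists (Rmin eps1 eps2); split; [apply Rmin_glb_lt; assumption|].
    intros eps Heps g' h' [E|Hin].
    + injection E as <- <-; rewrite dot_vadd_vscale.
      pose proof (Rmin_r eps1 eps2); destruct (Rle_dec 0 (dot g z)); nra.
    + apply (H1 eps); [pose proof (Rmin_l eps1 eps2); lra|exact Hin].
Qed.

Lemma halfspace_dual (g l : V3) :
  (forall z, dot g z <= 0 -> dot l z <= 0) -> exists lam, 0 <= lam /\ l = vscale lam g.
Proof.
  intros Hgl.
  assert (Hlg : 0 <= dot l g).
  { enough (dot l (vscale (-1) g) <= 0) by (vunfold; simpl in *; lra).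
    apply Hgl; replace (dot g (vscale (-1) g)) with (- dot g g) by (vunfold; simpl; ring).
    enough (0 <= dot g g) by lra; vunfold; simpl; nra. }
  destruct (Req_dec (dot g g) 0) as [Hg0|Hg0].
  - apply dot_self_eq0 in Hg0; subst g.
    assert (Hl : l = vzero).
    { apply dot_self_eq0; apply Rle_antisym.
      - apply Hgl; vunfold; simpl; lra.
      - vunfold; simpl; nra. }
    exists 0; split; [lra|rewrite Hl; vring].
  - set (lam := dot l g / dot g g).
    set (r := vsub l (vscale lam g)).
    assert (Hgr : dot g r = 0) by (unfold r, lam; vunfold; simpl in *; field; exact Hg0).
    assert (Hlr : dot l r = 0).
    { apply Rle_antisym; [apply Hgl; lra|].
      enough (dot l (vscale (-1) r) <= 0) by (vunfold; simpl in *; lra).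
      apply Hgl; replace (dot g (vscale (-1) r)) with (- dot g r) by (vunfold; simpl; ring); lra. }
    assert (Hr : r = vzero).
    { apply dot_self_eq0.
      replace (dot r r) with (dot l r - lam * dot g r) by (unfold r; vunfold; simpl; ring).
      rewrite Hgr, Hlr; ring. }
    exists lam; split.
    + assert (0 < dot g g) by (enough (0 <= dot g g) by lra; vunfold; simpl; nra).
      unfold lam, Rdiv; apply Rmult_le_pos; [exact Hlg|left; apply Rinv_0_lt_compat; assumption].
    + apply V3_ext; unfold r in Hr; vunfold; simpl in *;
        injection Hr; intros; lra.
Qed.

Lemma cross_eq0_of_orthogonal (g g' a b : V3) :
  cross g g' <> vzero -> dot g a = 0 -> dot g' a = 0 -> dot g b = 0 -> dot g' b = 0 ->
  cross a b = vzero.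
Proof.
  intros Hn Ha Ha' Hb Hb'; set (n := cross g g') in Hn.
  assert (Hnn : dot n n <> 0) by (intros E; apply Hn, dot_self_eq0, E).
  (* a vector orthogonal to g and g' is a multiple of n *)
  assert (Hpar : forall x, dot g x = 0 -> dot g' x = 0 -> vscale (dot n n) x = vscale (dot n x) n).
  { intros x Hx Hx'.
    assert (Hnx : cross n x = vzero).
    { replace (cross n x) with (vsub (vscale (dot g x) g') (vscale (dot g' x) g))
        by (unfold n; vring).
      rewrite Hx, Hx'; vring. }
    replace (vscale (dot n n) x) with (vadd (vscale (dot n x) n) (cross (cross n x) n)) by vring.
    rewrite Hnx; vring. }
  apply (vscale_eq0 (dot n n * dot n n)); [apply Rmult_integral_contrapositive; tauto|].
  replace (vscale (dot n n * dot n n) (cross a b))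
    with (cross (vscale (dot n n) a) (vscale (dot n n) b)) by vring.
  rewrite (Hpar a Ha Ha'), (Hpar b Hb Hb'); vring.
Qed.

Lemma pair_eq_or_neq (x y : V3 * R) : x = y \/ x <> y.
Proof.
  destruct x as [[a1 a2 a3] a4], y as [[b1 b2 b3] b4].
  destruct (Req_dec a1 b1) as [<-|N]; [|right; congruence].
  destruct (Req_dec a2 b2) as [<-|N]; [|right; congruence].
  destruct (Req_dec a3 b3) as [<-|N]; [|right; congruence].
  destruct (Req_dec a4 b4) as [<-|N]; [left; reflexivity|right; congruence].
Qed.

Section Facet.

Variable cs : list (V3 * R).

Hypothesis independent_or_disjoint :
  forall g h g' h', In (g, h) cs -> In (g', h') cs -> (g, h) <> (g', h') ->
  cross g g' <> vzero \/ forall y, dot g y = h -> dot g' y = h' -> False.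

Variables (l y1 y2 y3 : V3) (k : R).
Hypotheses (Hl : l <> vzero) (Hsupp : forall y, polyhedron cs y -> dot l y <= k)
  (H1 : polyhedron cs y1) (H2 : polyhedron cs y2) (H3 : polyhedron cs y3)
  (E1 : dot l y1 = k) (E2 : dot l y2 = k) (E3 : dot l y3 = k)
  (Hnc : cross (vsub y2 y1) (vsub y3 y1) <> vzero).

Let centroid := vscale (1 / 3) (vadd y1 (vadd y2 y3)).

Let dot_centroid (g : V3) : dot g centroid = (dot g y1 + dot g y2 + dot g y3) / 3.
Proof. unfold centroid; vunfold; simpl; field. Qed.

Let centroid_in : polyhedron cs centroid.
Proof.
  intros g h Hin; rewrite dot_centroid.
  pose proof (H1 g h Hin); pose proof (H2 g h Hin); pose proof (H3 g h Hin); lra.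
Qed.

Let centroid_tight (g : V3) (h : R) : In (g, h) cs -> dot g centroid = h ->
  dot g y1 = h /\ dot g y2 = h /\ dot g y3 = h.
Proof.
  intros Hin; rewrite dot_centroid.
  pose proof (H1 g h Hin); pose proof (H2 g h Hin); pose proof (H3 g h Hin); lra.
Qed.

Let centroid_feasible (z : V3) :
  (forall g h, In (g, h) cs -> dot g centroid = h -> dot g z <= 0) -> dot l z <= 0.
Proof.
  intros Hz; destruct (polyhedron_perturb cs centroid z centroid_in Hz) as (eps & Heps & Hpz).
  pose proof (Hsupp _ (Hpz eps ltac:(lra))) as Hle.
  rewrite dot_vadd_vscale, dot_centroid, E1, E2, E3 in Hle.
  apply (Rmult_le_reg_l eps); lra.
Qed.

Let centroid_tight_unique (g g' : V3) (h h' : R) : In (g, h) cs -> In (g', h') cs ->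
  dot g centroid = h -> dot g' centroid = h' -> (g, h) = (g', h').
Proof.
  intros Hin Hin' Ht Ht'.
  destruct (pair_eq_or_neq (g, h) (g', h')) as [E|Hne]; [exact E|exfalso].
  destruct (centroid_tight g h Hin Ht) as (A1 & A2 & A3).
  destruct (centroid_tight g' h' Hin' Ht') as (B1 & B2 & B3).
  destruct (independent_or_disjoint g h g' h' Hin Hin' Hne) as [Hind|Hdisj].
  - apply Hnc, (cross_eq0_of_orthogonal g g'); try assumption;
      rewrite dot_vsub; lra.
  - exact (Hdisj y1 A1 B1).
Qed.

(* The centroid of the three points is tight for exactly one constraint; the supporting
   functional is nonpositive on the cone of feasible directions there, hence a positive
   multiple of that constraint's normal. *)
Lemma polyhedron_facet :
  exists g h, In (g, h) cs /\ forall y, polyhedron cs y -> (dot l y = k <-> dot g y = h).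
Proof.
  destruct (Exists_dec (fun gh => dot (fst gh) centroid = snd gh) cs (fun gh => Req_EM_T _ _))
    as [Hex|Hnone].
  - apply Exists_exists in Hex; destruct Hex as ([g h] & Hin & Ht); simpl in Ht.
    destruct (halfspace_dual g l) as (lam & Hlam & ->).
    { intros z Hz; apply centroid_feasible; intros g' h' Hin' Ht'.
      pose proof (centroid_tight_unique g g' h h' Hin Hin' Ht Ht') as E.
      injection E as <- <-; exact Hz. }
    assert (Hk : k = lam * h)
      by (rewrite <- E1, <- (proj1 (centroid_tight g h Hin Ht)); vunfold; simpl; ring).
    assert (Hlam0 : lam <> 0) by (intros ->; apply Hl; vring).
    exists g, h; split; [exact Hin|intros y _].
    replace (dot (vscale lam g) y) with (lam * dot g y) by (vunfold; simpl; ring).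
    rewrite Hk; split; intros Hy; [apply (Rmult_eq_reg_l lam); assumption|rewrite Hy; reflexivity].
  - exfalso; apply Hl, dot_self_eq0, Rle_antisym.
    + apply centroid_feasible; intros g h Hin Ht; exfalso; apply Hnone, Exists_exists.
      exists (g, h); split; assumption.
    + vunfold; simpl; nra.
Qed.

End Facet.

(** * Integrality of difference-constraint polytopes *)

Definition round (s x : R) : R := IZR (Int_part x) + s * frac_part x.

Lemma Int_part_IZR_add (n : Z) (s : R) : 0 <= s < 1 -> Int_part (IZR n + s) = n.
Proof. intros Hs; symmetry; apply Int_part_spec; lra. Qed.

Lemma frac_part_IZR (n : Z) : frac_part (IZR n) = 0.
Proof.
  unfold frac_part; rewrite <- (Rplus_0_r (IZR n)) at 2.
  rewrite Int_part_IZR_add by lra; ring.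
Qed.

Lemma round_IZR (s : R) (n : Z) : round s (IZR n) = IZR n.
Proof.
  unfold round; rewrite frac_part_IZR, <- (Rplus_0_r (IZR n)) at 1.
  rewrite Int_part_IZR_add by lra; ring.
Qed.

Lemma round_diff_le (x x' s : R) (C : Z) :
  x - x' <= IZR C -> 0 <= s -> s * frac_part x <= 1 -> s * frac_part x' <= 1 ->
  round s x - round s x' <= IZR C.
Proof.
  intros H Hs Hx Hx'; unfold round.
  rewrite (Rplus_Int_part_frac_part x), (Rplus_Int_part_frac_part x') in H.
  destruct (base_fp x) as [Fx Fx']; destruct (base_fp x') as [Fy Fy'].
  set (F := (Int_part x - Int_part x')%Z).
  assert (HF : (F <= C)%Z) by (apply Z.lt_succ_r, lt_IZR; unfold F; rewrite succ_IZR, minus_IZR; lra).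
  destruct (Z.eq_dec F C) as [EF|NF].
  - assert (IZR (Int_part x) - IZR (Int_part x') = IZR C)
      by (rewrite <- minus_IZR; f_equal; exact EF).
    assert (frac_part x <= frac_part x') by lra.
    assert (s * frac_part x <= s * frac_part x') by (apply Rmult_le_compat_l; assumption).
    lra.
  - assert (HF' : (F + 1 <= C)%Z) by lia.
    apply IZR_le in HF'; unfold F in HF'; rewrite plus_IZR, minus_IZR in HF'.
    assert (0 <= s * frac_part x') by (apply Rmult_le_pos; lra).
    lra.
Qed.

Definition diff_region (a d b e c f : Z) (p q r : R) : Prop :=
  IZR a <= p <= IZR d /\ IZR b <= q - p <= IZR e /\ IZR c <= r <= IZR f /\ q <= r.

Lemma diff_region_round (a d b e c f : Z) (p q r s : R) :
  diff_region a d b e c f p q r -> 0 <= s ->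
  s * frac_part p <= 1 -> s * frac_part q <= 1 -> s * frac_part r <= 1 ->
  diff_region a d b e c f (round s p) (round s q) (round s r).
Proof.
  intros (Hp & Hqp & Hr & Hqr) Hs Fp Fq Fr.
  assert (Fc : forall n : Z, s * frac_part (IZR n) <= 1) by (intros; rewrite frac_part_IZR; lra).
  pose proof (round_diff_le (IZR a) p s 0 ltac:(simpl; lra) Hs (Fc a) Fp) as K1.
  pose proof (round_diff_le p (IZR d) s 0 ltac:(simpl; lra) Hs Fp (Fc d)) as K2.
  pose proof (round_diff_le p q s (- b) ltac:(rewrite opp_IZR; lra) Hs Fp Fq) as K3.
  pose proof (round_diff_le q p s e ltac:(lra) Hs Fq Fp) as K4.
  pose proof (round_diff_le (IZR c) r s 0 ltac:(simpl; lra) Hs (Fc c) Fr) as K5.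
  pose proof (round_diff_le r (IZR f) s 0 ltac:(simpl; lra) Hs Fr (Fc f)) as K6.
  pose proof (round_diff_le q r s 0 ltac:(simpl; lra) Hs Fq Fr) as K7.
  rewrite !round_IZR in *; rewrite opp_IZR in K3; simpl in *.
  unfold diff_region; lra.
Qed.

Lemma round_0 (x : R) : round 0 x = IZR (Int_part x).
Proof. unfold round; ring. Qed.

Lemma round_between (x M : R) : M <> 0 -> round 0 x + M * (round (/ M) x - round 0 x) = x.
Proof.
  intros HM; transitivity (IZR (Int_part x) + frac_part x).
  - unfold round; field; exact HM.
  - symmetry; apply Rplus_Int_part_frac_part.
Qed.

Definition nonint (x : R) : nat := if Req_EM_T (frac_part x) 0 then 0%nat else 1%nat.

Lemma nonint_0 (x : R) : nonint x = 0%nat -> x = IZR (Int_part x).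
Proof.
  unfold nonint; destruct Req_EM_T as [E|_]; [|discriminate].
  intros _; rewrite (Rplus_Int_part_frac_part x) at 1; rewrite E; ring.
Qed.

Lemma nonint_frac_pos (x : R) : nonint x <> 0%nat -> 0 < frac_part x.
Proof.
  unfold nonint; destruct Req_EM_T as [_|E]; [congruence|intros _].
  destruct (base_fp x); lra.
Qed.

Lemma nonint_round (x M : R) : 0 < M -> frac_part x <= M ->
  (nonint (round (/ M) x) <= nonint x)%nat /\
  (frac_part x = M -> nonint (round (/ M) x) = 0%nat /\ nonint x = 1%nat).
Proof.
  intros HM Hx; unfold round; split.
  - unfold nonint at 2; destruct Req_EM_T as [E|_]; [|unfold nonint; destruct Req_EM_T; lia].
    rewrite E, Rmult_0_r, Rplus_0_r; unfold nonint; rewrite frac_part_IZR.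
    destruct Req_EM_T; [lia|congruence].
  - intros E; rewrite E, Rinv_l by lra; rewrite <- plus_IZR; unfold nonint.
    rewrite frac_part_IZR; split; destruct Req_EM_T; (lia || lra).
Qed.

Lemma Rmax3_attained (x y z : R) :
  exists M, x <= M /\ y <= M /\ z <= M /\ (M = x \/ M = y \/ M = z).
Proof.
  exists (Rmax (Rmax x y) z); repeat split.
  - eapply Rle_trans; [apply Rmax_l|apply Rmax_l].
  - eapply Rle_trans; [apply Rmax_r|apply Rmax_l].
  - apply Rmax_r.
  - unfold Rmax; repeat destruct Rle_dec; auto.
Qed.

Lemma diff_region_integral (a d b e c f : Z) (K : R -> R -> R -> Prop) :
  (forall p q r p' q' r' s, K p q r -> K p' q' r' -> 0 <= s <= 1 ->
     K (p + s * (p' - p)) (q + s * (q' - q)) (r + s * (r' - r))) ->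
  (forall i j k : Z, diff_region a d b e c f (IZR i) (IZR j) (IZR k) -> K (IZR i) (IZR j) (IZR k)) ->
  forall p q r, diff_region a d b e c f p q r -> K p q r.
Proof.
  intros Hconv Hint.
  (* induction on the number of non-integral coordinates: with M the largest fractional part,
     the point lies between its floor and [round (/ M)] of it, which has fewer of them *)
  assert (Main : forall N p q r, (nonint p + nonint q + nonint r <= N)%nat ->
                   diff_region a d b e c f p q r -> K p q r).
  { induction N as [|N IH]; intros p q r HN Hd.
    - rewrite (nonint_0 p), (nonint_0 q), (nonint_0 r) in Hd |- * by lia; apply Hint, Hd.
    - destruct (Nat.eq_dec (nonint p + nonint q + nonint r) 0) as [Z0|NZ].
      { apply IH; [lia|exact Hd]. }
      destruct (Rmax3_attained (frac_part p) (frac_part q) (frac_part r)) as (M & Mp & Mq & Mr & HM).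
      assert (M1 : M < 1).
      { destruct (base_fp p), (base_fp q), (base_fp r); destruct HM as [-> | [-> | ->]]; assumption. }
      assert (M0 : 0 < M).
      { assert (Hn : (nonint p <> 0 \/ nonint q <> 0 \/ nonint r <> 0)%nat) by lia.
        destruct Hn as [N0|[N0|N0]]; apply nonint_frac_pos in N0; lra. }
      destruct (nonint_round p M M0 Mp) as [Ip Jp];
      destruct (nonint_round q M M0 Mq) as [Iq Jq];
      destruct (nonint_round r M M0 Mr) as [Ir Jr].
      assert (Kfloor : K (round 0 p) (round 0 q) (round 0 r)).
      { rewrite !round_0; apply Hint; rewrite <- !round_0.
        apply diff_region_round; [exact Hd|..]; lra. }
      assert (Kmax : K (round (/ M) p) (round (/ M) q) (round (/ M) r)).
      { apply IH.
        - destruct HM as [E|[E|E]]; symmetry in E;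
            [destruct (Jp E)|destruct (Jq E)|destruct (Jr E)]; lia.
        - assert (Hs : forall x, frac_part x <= M -> / M * frac_part x <= 1).
          { intros x Hx; apply (Rmult_le_reg_l M); [exact M0|].
            rewrite <- Rmult_assoc, Rinv_r by lra; lra. }
          apply diff_region_round; auto; left; apply Rinv_0_lt_compat, M0. }
      rewrite <- (round_between p M), <- (round_between q M), <- (round_between r M) by lra.
      apply Hconv; [exact Kfloor|exact Kmax|lra]. }
  intros p q r; apply (Main 3%nat); unfold nonint; repeat destruct Req_EM_T; lia.
Qed.

(** * The dome *)

Definition pt3 (o u v w y : V3) : V3 :=
  vadd o (vadd (vscale (vx y) u) (vadd (vscale (vy y) v) (vscale (vz y) w))).

Definition coord_form (u v w n : V3) : V3 := mkV (dot n u) (dot n v) (dot n w).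

Lemma dot_pt3 (o u v w n y : V3) : dot n (pt3 o u v w y) = dot n o + dot (coord_form u v w n) y.
Proof. unfold pt3, coord_form; vunfold; simpl; ring. Qed.

Lemma pt3_affine (o u v w y y' : V3) (s : R) :
  pt3 o u v w (vadd y (vscale s (vsub y' y))) =
  vadd (pt3 o u v w y) (vscale s (vsub (pt3 o u v w y') (pt3 o u v w y))).
Proof. unfold pt3; vring. Qed.

Lemma cross_pt3 (o u v w y1 y2 y3 : V3) :
  cross (vsub (pt3 o u v w y2) (pt3 o u v w y1)) (vsub (pt3 o u v w y3) (pt3 o u v w y1)) =
  let c := cross (vsub y2 y1) (vsub y3 y1) in
  vadd (vscale (vz c) (cross u v)) (vadd (vscale (- vy c) (cross u w)) (vscale (vx c) (cross v w))).
Proof. unfold pt3; vring. Qed.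

Lemma pt3_cross_eq0 (o u v w y1 y2 y3 : V3) :
  cross (vsub y2 y1) (vsub y3 y1) = vzero ->
  cross (vsub (pt3 o u v w y2) (pt3 o u v w y1)) (vsub (pt3 o u v w y3) (pt3 o u v w y1)) = vzero.
Proof. intros H; rewrite cross_pt3; cbv zeta; rewrite H; vring. Qed.

Lemma coord_form_eq0 (u v w n : V3) : det3 u v w <> 0 -> coord_form u v w n = vzero -> n = vzero.
Proof.
  intros Hdet E; apply (vscale_eq0 (det3 u v w) n Hdet).
  replace (vscale (det3 u v w) n) with
    (vadd (vscale (dot n u) (cross v w))
          (vadd (vscale (dot n v) (cross w u)) (vscale (dot n w) (cross u v))))
    by vring.
  unfold coord_form in E; injection E as -> -> ->; vring.
Qed.

(* Apex of the regular unit tetrahedron on the lattice triangle 0, u, v. *)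
Definition apex (u v : V3) : V3 :=
  vadd (vscale (1 / 3) (vadd u v)) (vscale (2 * sqrt 2 / 3) (cross u v)).

Lemma apex_height2 : (2 * sqrt 2 / 3) * (2 * sqrt 2 / 3) = 8 / 9.
Proof.
  replace ((2 * sqrt 2 / 3) * (2 * sqrt 2 / 3)) with (4 / 9 * (sqrt 2 * sqrt 2)) by field.
  rewrite sqrt_sqrt by lra; field.
Qed.

Lemma apex_frame (u v : V3) :
  lattice_frame u v -> lattice_frame u (apex u v) /\ lattice_frame v (apex u v).
Proof.
  intros Hf; pose proof (lattice_frame_cross u v Hf) as Hc; destruct Hf as (Hu & Hv & Huv).
  assert (Hu0 : dot u (cross u v) = 0) by (vunfold; simpl; ring).
  assert (Hv0 : dot v (cross u v) = 0) by (vunfold; simpl; ring).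
  set (h := 2 * sqrt 2 / 3) in *.
  assert (Dw : dot (apex u v) (apex u v) = 1 / 9 * (dot u u + 2 * dot u v + dot v v)
            + 2 / 3 * h * (dot u (cross u v) + dot v (cross u v))
            + h * h * dot (cross u v) (cross u v))
    by (unfold apex; fold h; vunfold; simpl; field).
  assert (Du : dot u (apex u v) = 1 / 3 * (dot u u + dot u v) + h * dot u (cross u v))
    by (unfold apex; fold h; vunfold; simpl; field).
  assert (Dv : dot v (apex u v) = 1 / 3 * (dot u v + dot v v) + h * dot v (cross u v))
    by (unfold apex; fold h; vunfold; simpl; field).
  unfold h in *; rewrite apex_height2, Hu0, Hv0, Hc, Hu, Hv, Huv in Dw.
  rewrite Hu0, Hu, Huv in Du; rewrite Hv0, Huv, Hv in Dv.
  unfold lattice_frame; repeat split; lra.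
Qed.

Lemma det3_apex_pos (u v : V3) : lattice_frame u v -> 0 < det3 u v (apex u v).
Proof.
  intros Hf.
  replace (det3 u v (apex u v)) with (2 * sqrt 2 / 3 * dot (cross u v) (cross u v))
    by (unfold apex; vunfold; simpl; field).
  rewrite (lattice_frame_cross u v Hf).
  pose proof (sqrt_lt_R0 2 ltac:(lra)); lra.
Qed.

Lemma lattice_frame_sub (u v w : V3) :
  lattice_frame u v -> lattice_frame u w -> lattice_frame v w -> lattice_frame (vsub u w) (vsub v w).
Proof.
  intros (Hu & Hv & Huv) (_ & Hw & Huw) (_ & _ & Hvw); unfold lattice_frame.
  replace (dot (vsub u w) (vsub u w)) with (dot u u - 2 * dot u w + dot w w) by (vunfold; simpl; ring).
  replace (dot (vsub v w) (vsub v w)) with (dot v v - 2 * dot v w + dot w w) by (vunfold; simpl; ring).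
  replace (dot (vsub u w) (vsub v w)) with (dot u v - dot u w - dot v w + dot w w)
    by (vunfold; simpl; ring).
  rewrite Hu, Hv, Huv, Huw, Hvw, Hw; repeat split; field.
Qed.

Definition dome_constraints (a d b e c f : Z) : list (V3 * R) :=
  (mkV 0 0 (-1), 0) :: (mkV (-1) 0 0, - IZR a) :: (mkV 1 0 0, IZR d) ::
  (mkV 0 (-1) 0, - IZR b) :: (mkV 0 1 0, IZR e) ::
  (mkV (-1) (-1) (-1), - IZR c) :: (mkV 1 1 1, IZR f) :: nil.

Lemma dome_iff (a d b e c f : Z) (y : V3) :
  polyhedron (dome_constraints a d b e c f) y <->
  0 <= vz y /\ IZR a <= vx y <= IZR d /\ IZR b <= vy y <= IZR e /\
  IZR c <= vx y + vy y + vz y <= IZR f.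
Proof.
  unfold polyhedron, dome_constraints; split.
  - intros H.
    pose proof (H (mkV 0 0 (-1)) 0 ltac:(simpl; tauto)).
    pose proof (H (mkV (-1) 0 0) (- IZR a) ltac:(simpl; tauto)).
    pose proof (H (mkV 1 0 0) (IZR d) ltac:(simpl; tauto)).
    pose proof (H (mkV 0 (-1) 0) (- IZR b) ltac:(simpl; tauto)).
    pose proof (H (mkV 0 1 0) (IZR e) ltac:(simpl; tauto)).
    pose proof (H (mkV (-1) (-1) (-1)) (- IZR c) ltac:(simpl; tauto)).
    pose proof (H (mkV 1 1 1) (IZR f) ltac:(simpl; tauto)).
    unfold dot in *; simpl in *; lra.
  - intros Hy g h Hin; simpl in Hin.
    repeat destruct Hin as [Hin|Hin]; try contradiction; injection Hin as <- <-;
      unfold dot; simpl; lra.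
Qed.

Definition zpt (p : Z * Z * Z) : V3 := let '(i, j, k) := p in mkV (IZR i) (IZR j) (IZR k).

Definition dome_lattice (a d b e c f : Z) : list (Z * Z * Z) :=
  filter (fun '(i, j, k) => (c <=? i + j + k) && (i + j + k <=? f))%Z
    (flat_map (fun i => flat_map (fun j => map (fun k => (i, j, k)) (zrange 0 (f - a - b)))
                                 (zrange b e))
              (zrange a d)).

Lemma In_dome_lattice (a d b e c f : Z) (p : Z * Z * Z) :
  In p (dome_lattice a d b e c f) <-> polyhedron (dome_constraints a d b e c f) (zpt p).
Proof.
  destruct p as [[i j] k]; unfold zpt; rewrite dome_iff; unfold dome_lattice.
  rewrite filter_In, andb_true_iff, !Z.leb_le, in_flat_map; simpl vx; simpl vy; simpl vz.
  setoid_rewrite in_flat_map; setoid_rewrite In_zrange; setoid_rewrite in_map_iff;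
  setoid_rewrite In_zrange.
  rewrite <- !plus_IZR; split.
  - intros ((i' & Hi & j' & Hj & k' & E & Hk) & Hs); injection E as <- <- <-.
    repeat split; apply IZR_le; lia.
  - intros (Hk & (Hi1 & Hi2) & (Hj1 & Hj2) & Hs1 & Hs2).
    apply le_IZR in Hk, Hi1, Hi2, Hj1, Hj2, Hs1, Hs2.
    split; [exists i; split; [lia|exists j; split; [lia|exists k; split; [reflexivity|lia]]]|lia].
Qed.

Definition dome_points (o u v w : V3) (a d b e c f : Z) : list V3 :=
  map (fun p => pt3 o u v w (zpt p)) (dome_lattice a d b e c f).

Lemma In_dome_points (o u v w : V3) (a d b e c f : Z) (p : Z * Z * Z) :
  polyhedron (dome_constraints a d b e c f) (zpt p) ->
  In (pt3 o u v w (zpt p)) (dome_points o u v w a d b e c f).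
Proof. intros Hp; apply (in_map (fun q => pt3 o u v w (zpt q))), In_dome_lattice, Hp. Qed.

Lemma dome_hull_sub (o u v w : V3) (a d b e c f : Z) (x : V3) :
  hull (dome_points o u v w a d b e c f) x ->
  exists y, polyhedron (dome_constraints a d b e c f) y /\ x = pt3 o u v w y.
Proof.
  apply (hull_min (fun x => exists y,
    polyhedron (dome_constraints a d b e c f) y /\ x = pt3 o u v w y)).
  - intros x1 x2 t (y1 & H1 & ->) (y2 & H2 & ->) Ht.
    exists (vadd y1 (vscale t (vsub y2 y1))); split; [apply polyhedron_convex; assumption|].
    symmetry; apply pt3_affine.
  - intros p Hp; unfold dome_points in Hp; apply in_map_iff in Hp.
    destruct Hp as (q & <- & Hq); exists (zpt q); split; [apply In_dome_lattice, Hq|reflexivity].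
Qed.

Lemma dome_region_hull (o u v w : V3) (a d b e c f : Z) (y : V3) :
  polyhedron (dome_constraints a d b e c f) y ->
  hull (dome_points o u v w a d b e c f) (pt3 o u v w y).
Proof.
  (* in the coordinates p = i, q = i + j, r = i + j + k the dome is cut out by
     constraints on differences of coordinates *)
  set (K := fun p q r => hull (dome_points o u v w a d b e c f) (pt3 o u v w (mkV p (q - p) (r - q)))).
  intros Hy; destruct y as [i j k].
  replace (mkV i j k) with (mkV i ((i + j) - i) ((i + j + k) - (i + j))) by (f_equal; ring).
  apply dome_iff in Hy; simpl in Hy.
  apply (diff_region_integral a d b e c f K); [| |unfold diff_region; lra].
  - intros p q r p' q' r' s H1 H2 Hs; unfold K in *.
    replace (mkV (p + s * (p' - p)) (q + s * (q' - q) - (p + s * (p' - p)))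
                 (r + s * (r' - r) - (q + s * (q' - q))))
      with (vadd (mkV p (q - p) (r - q))
                 (vscale s (vsub (mkV p' (q' - p') (r' - q')) (mkV p (q - p) (r - q)))))
      by vring.
    rewrite pt3_affine; apply hull_convex; assumption.
  - intros i' j' k' Hd; unfold K, diff_region in *; rewrite <- !minus_IZR.
    apply hull_In, in_map_iff; exists (i', j' - i', k' - j')%Z; split; [reflexivity|].
    apply In_dome_lattice, dome_iff; simpl; rewrite !minus_IZR; lra.
Qed.

Lemma dome_constraints_independent (a d b e c f : Z) :
  (a < d)%Z -> (b < e)%Z -> (c < f)%Z ->
  forall g h g' h', In (g, h) (dome_constraints a d b e c f) ->
  In (g', h') (dome_constraints a d b e c f) -> (g, h) <> (g', h') ->
  cross g g' <> vzero \/ forall y, dot g y = h -> dot g' y = h' -> False.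
Proof.
  intros Had Hbe Hcf; apply IZR_lt in Had, Hbe, Hcf.
  intros g h g' h' Hin Hin' Hne; simpl in Hin, Hin'.
  repeat destruct Hin as [Hin|Hin]; try contradiction; injection Hin as <- <-;
  repeat destruct Hin' as [Hin'|Hin']; try contradiction; injection Hin' as <- <-;
  first [ exfalso; apply Hne; reflexivity
        | left; intros E; vunfold; injection E; intros; lra
        | right; intros y; unfold dot; simpl; intros; lra ].
Qed.

Definition dome_facet (o u v w : V3) (a d b e c f : Z) (g : V3) (h : R) : region :=
  fun x => exists y, polyhedron (dome_constraints a d b e c f) y /\ dot g y = h /\ x = pt3 o u v w y.

Lemma dome_bottom (o u v w : V3) (a d b e c f : Z) :
  same_region (dome_facet o u v w a d b e c f (mkV 0 0 (-1)) 0) (hexagon o u v a d b e c f).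
Proof.
  intros x; split.
  - intros ([i j k] & Hy & Hg & ->); apply dome_iff in Hy; unfold dot in Hg; simpl in Hy, Hg.
    exists i, j; split; [replace k with 0 by lra; unfold pt3, pt2; vring|lra].
  - intros (X & Y & -> & B1 & B2 & B3); exists (mkV X Y 0).
    rewrite dome_iff; unfold dot; simpl; split; [lra|split; [ring|unfold pt3, pt2; vring]].
Qed.

Ltac facet_to_hexagon X Y :=
  intros ([i j k] & Hy & Hg & ->); apply dome_iff in Hy; unfold dot in Hg; simpl in Hy, Hg;
  exists X, Y; split; [unfold pt3, pt2; apply V3_ext; vunfold; simpl; nra|
                      rewrite ?minus_IZR, ?plus_IZR; simpl; lra].

Ltac hexagon_to_facet F :=
  intros (X & Y & -> & B1 & B2 & B3); rewrite ?minus_IZR, ?plus_IZR in *; simpl in *;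
  exists (F X Y); rewrite dome_iff; unfold dot; simpl;
  split; [lra|split; [ring|unfold pt3, pt2; vring]].

Lemma dome_facet_hexagon (o u v w : V3) (a d b e c f : Z) (g : V3) (h : R) :
  lattice_frame u v -> lattice_frame u w -> lattice_frame v w ->
  (a <= d)%Z -> (b <= e)%Z -> (c <= f)%Z ->
  In (g, h) (dome_constraints a d b e c f) ->
  exists o' u' v' a' d' b' e' c' f', lattice_frame u' v' /\
    same_region (dome_facet o u v w a d b e c f g h) (hexagon o' u' v' a' d' b' e' c' f').
Proof.
  intros Huv Huw Hvw Had Hbe Hcf Hin; apply IZR_le in Had, Hbe, Hcf; simpl in Hin.
  repeat destruct Hin as [Hin|Hin]; try contradiction; injection Hin as <- <-.
  - exists o, u, v, a, d, b, e, c, f; split; [exact Huv|apply dome_bottom].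
  - exists (vadd o (vscale (IZR a) u)), v, w, b, e, 0%Z, (f - a - b)%Z, (c - a)%Z, (f - a)%Z.
    split; [exact Hvw|intros x; split;
      [facet_to_hexagon j k|hexagon_to_facet (fun X Y => mkV (IZR a) X Y)]].
  - exists (vadd o (vscale (IZR d) u)), v, w, b, e, 0%Z, (f - d - b)%Z, (c - d)%Z, (f - d)%Z.
    split; [exact Hvw|intros x; split;
      [facet_to_hexagon j k|hexagon_to_facet (fun X Y => mkV (IZR d) X Y)]].
  - exists (vadd o (vscale (IZR b) v)), u, w, a, d, 0%Z, (f - a - b)%Z, (c - b)%Z, (f - b)%Z.
    split; [exact Huw|intros x; split;
      [facet_to_hexagon i k|hexagon_to_facet (fun X Y => mkV X (IZR b) Y)]].
  - exists (vadd o (vscale (IZR e) v)), u, w, a, d, 0%Z, (f - a - e)%Z, (c - e)%Z, (f - e)%Z.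
    split; [exact Huw|intros x; split;
      [facet_to_hexagon i k|hexagon_to_facet (fun X Y => mkV X (IZR e) Y)]].
  - exists (vadd o (vscale (IZR c) w)), (vsub u w), (vsub v w), a, d, b, e, (a + b)%Z, c.
    split; [apply lattice_frame_sub; assumption|intros x; split;
      [facet_to_hexagon i j|hexagon_to_facet (fun X Y => mkV X Y (IZR c - X - Y))]].
  - exists (vadd o (vscale (IZR f) w)), (vsub u w), (vsub v w), a, d, b, e, (a + b)%Z, f.
    split; [apply lattice_frame_sub; assumption|intros x; split;
      [facet_to_hexagon i j|hexagon_to_facet (fun X Y => mkV X Y (IZR f - X - Y))]].
Qed.

Lemma dome_plane_section (o u v w : V3) (a d b e c f : Z) (n g : V3) (k h : R) :
  (forall y, polyhedron (dome_constraints a d b e c f) y ->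
     (dot (coord_form u v w n) y = k - dot n o <-> dot g y = h)) ->
  same_region (fun x => hull (dome_points o u v w a d b e c f) x /\ dot n x = k)
    (dome_facet o u v w a d b e c f g h).
Proof.
  intros Hgh x; split.
  - intros [Hx Hk]; destruct (dome_hull_sub o u v w a d b e c f x Hx) as (y & Hy & ->).
    exists y; split; [exact Hy|split; [apply Hgh; [exact Hy|]|reflexivity]].
    rewrite dot_pt3 in Hk; lra.
  - intros (y & Hy & Hg & ->); split; [apply dome_region_hull, Hy|].
    rewrite dot_pt3; apply Hgh in Hg; [lra|exact Hy].
Qed.

Section DomeFaces.

Variables (o u v : V3) (a d b e c f : Z).
Hypotheses (Huv : lattice_frame u v) (Had : (a < d)%Z) (Hbe : (b < e)%Z) (Hcf : (c < f)%Z).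

Let w := apex u v.
Let S := dome_points o u v w a d b e c f.

Lemma dome_face_facet (F : region) :
  is_face (hull S) F -> exists g h, In (g, h) (dome_constraints a d b e c f) /\
    same_region F (dome_facet o u v w a d b e c f g h).
Proof.
  intros (n & k & Hn & Hsupp & HF & x1 & x2 & x3 & F1 & F2 & F3 & Hnc).
  apply HF in F1, F2, F3.
  destruct F1 as [(y1 & Hy1 & ->)%dome_hull_sub E1], F2 as [(y2 & Hy2 & ->)%dome_hull_sub E2],
    F3 as [(y3 & Hy3 & ->)%dome_hull_sub E3].
  rewrite dot_pt3 in E1, E2, E3.
  destruct (polyhedron_facet (dome_constraints a d b e c f)
              (dome_constraints_independent a d b e c f Had Hbe Hcf)
              (coord_form u v w n) y1 y2 y3 (k - dot n o)) as (g & h & Hin & Hgh);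
    try assumption; try lra.
  - intros E; apply Hn, (coord_form_eq0 u v w n); [|exact E].
    pose proof (det3_apex_pos u v Huv) as Hdet; fold w in Hdet; lra.
  - intros y Hy; pose proof (Hsupp _ (dome_region_hull o u v w a d b e c f y Hy)) as Hk.
    rewrite dot_pt3 in Hk; lra.
  - intros E; apply Hnc, pt3_cross_eq0, E.
  - exists g, h; split; [exact Hin|].
    exact (same_region_trans _ _ _ HF (dome_plane_section o u v w a d b e c f n g k h Hgh)).
Qed.

Lemma dome_face_polyiamond (F : region) : is_face (hull S) F -> convex_polyiamond F.
Proof.
  intros HF; destruct (dome_face_facet F HF) as (g & h & Hin & HFg).
  destruct (apex_frame u v Huv) as [Huw Hvw].
  destruct (dome_facet_hexagon o u v w a d b e c f g h Huv Huw Hvw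
              ltac:(lia) ltac:(lia) ltac:(lia) Hin)
    as (o' & u' & v' & a' & d' & b' & e' & c' & f' & Hf' & Hhex).
  pose proof (same_region_trans _ _ _ HFg Hhex) as HFhex.
  apply (convex_polyiamond_same _ _ HFhex).
  destruct HF as (_ & _ & _ & _ & _ & x1 & x2 & x3 & F1 & F2 & F3 & Hnc).
  apply (hexagon_polyiamond o' u' v' a' d' b' e' c' f' x1 x2 x3 Hf'); try apply HFhex; assumption.
Qed.

End DomeFaces.

Lemma dome_full_dim (o u v : V3) (a d b e c f : Z) (t : ltri) :
  lattice_frame u v -> cell_in_hex a d b e c f t ->
  full_dim (dome_points o u v (apex u v) a d b e c f).
Proof.
  intros Hf Ht; pose proof (det3_apex_pos u v Hf) as Hdet; set (w := apex u v) in *.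
  destruct t as [i j|i j];
    pose proof (Ht _ (or_introl eq_refl)) as H1;
    pose proof (Ht _ (or_intror (or_introl eq_refl))) as H2;
    pose proof (Ht _ (or_intror (or_intror (or_introl eq_refl)))) as H3;
    unfold hex_point in *; simpl in *.
  - exists (pt3 o u v w (zpt (i, j, 0%Z))), (pt3 o u v w (zpt (i + 1, j, 0)%Z)),
      (pt3 o u v w (zpt (i, j + 1, 0)%Z)), (pt3 o u v w (zpt (i, j, 1%Z))).
    repeat split; try (apply In_dome_points, dome_iff; simpl; rewrite <- ?plus_IZR;
                       repeat split; apply IZR_le; lia).
    match goal with |- ?D <> 0 => replace D with (det3 u v w) end; [lra|].
    unfold zpt, pt3; vunfold; simpl; rewrite ?plus_IZR; ring.
  - exists (pt3 o u v w (zpt (i + 1, j, 0)%Z)), (pt3 o u v w (zpt (i, j + 1, 0)%Z)),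
      (pt3 o u v w (zpt (i + 1, j + 1, 0)%Z)), (pt3 o u v w (zpt (i + 1, j, 1)%Z)).
    repeat split; try (apply In_dome_points, dome_iff; simpl; rewrite <- ?plus_IZR;
                       repeat split; apply IZR_le; lia).
    match goal with |- ?D <> 0 => replace D with (- det3 u v w) end; [lra|].
    unfold zpt, pt3; vunfold; simpl; rewrite ?plus_IZR; ring.
Qed.

Lemma dome_base_face (o u v : V3) (a d b e c f : Z) (t : ltri) :
  lattice_frame u v -> cell_in_hex a d b e c f t ->
  is_face (hull (dome_points o u v (apex u v) a d b e c f)) (hexagon o u v a d b e c f).
Proof.
  intros Hf Ht; pose proof (det3_apex_pos u v Hf) as Hdet; set (w := apex u v) in *.
  set (n := vscale (-1) (cross u v)).
  assert (Hform : forall y, dot (coord_form u v w n) y = - det3 u v w * vz y)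
    by (intros y; unfold n, coord_form; vunfold; simpl; ring).
  exists n, (dot n o); split; [|split; [|split]].
  - apply lattice_frame_cross_scale_neq0; [exact Hf|lra].
  - intros x Hx; destruct (dome_hull_sub o u v w a d b e c f x Hx) as (y & Hy & ->).
    apply dome_iff in Hy; rewrite dot_pt3, Hform; nra.
  - eapply same_region_trans; [apply same_region_sym, dome_bottom|].
    apply same_region_sym, dome_plane_section; intros y _.
    rewrite Hform; unfold dot; simpl; split; intros E; [|nra].
    assert (vz y = 0) by (apply (Rmult_eq_reg_l (det3 u v w)); lra); lra.
  - destruct t as [i j|i j];
      pose proof (hexagon_lpt_intro o u v _ _ _ _ _ _ _ _ (Ht _ (or_introl eq_refl)));
      pose proof (hexagon_lpt_intro o u v _ _ _ _ _ _ _ _ (Ht _ (or_intror (or_introl eq_refl))));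
      pose proof (hexagon_lpt_intro o u v _ _ _ _ _ _ _ _
                    (Ht _ (or_intror (or_intror (or_introl eq_refl))))).
    + exists (lpt o u v i j), (lpt o u v (i + 1) j), (lpt o u v i (j + 1)).
      do 3 (split; [assumption|]); rewrite !lpt_pt2.
      rewrite cross_pt2, !plus_IZR; apply lattice_frame_cross_scale_neq0; [exact Hf|lra].
    + exists (lpt o u v (i + 1) j), (lpt o u v i (j + 1)), (lpt o u v (i + 1) (j + 1)).
      do 3 (split; [assumption|]); rewrite !lpt_pt2.
      rewrite cross_pt2, !plus_IZR; apply lattice_frame_cross_scale_neq0; [exact Hf|lra].
Qed.

Theorem lemma13 : forall P : region, convex_polyiamond P -> can_be_domed P.
Proof.
  intros P (Hconv & o & u & v & T & Hu & Hv & Huv & HT & HP).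
  assert (Hf : lattice_frame u v) by (split; [|split]; assumption).
  assert (Htiling : tiling P o u v T) by (split; [|split; [|split]]; assumption).
  destruct (tiling_hexagon P o u v T Htiling) as (a & d & b & e & c & f & Hhex).
  destruct T as [|t T']; [contradiction|].
  assert (Ht : cell_in_hex a d b e c f t).
  { intros [i j] Hp; apply (hexagon_lpt o u v _ _ _ _ _ _ _ _ Hf), Hhex.
    exact (tiling_vertex P o u v _ Htiling t (i, j) (or_introl eq_refl) Hp). }
  destruct (cell_in_hex_nondegenerate a d b e c f t Ht) as (Had & Hbe & Hcf).
  exists (dome_points o u v (apex u v) a d b e c f); split; [|split].
  - exact (dome_full_dim o u v a d b e c f t Hf Ht).
  - exact (is_face_same _ _ _ Hhex (dome_base_face o u v a d b e c f t Hf Ht)).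
  - intros F HF _; exact (dome_face_polyiamond o u v a d b e c f Hf Had Hbe Hcf F HF).
Qed.
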